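(* For every integer $n\ge 4$, player 1 has a winning strategy in the transversal $n$-game; that is, with optimal play by both players, the transversal $n$-game is a win for player 1.
   Context: A transversal of an $n\times n$ grid is a set of $n$ cells no two of which lie in the same row or the same column. The transversal $n$-game is played on an $n\times n$ grid by two players who alternate moves, player 1 moving first. On each move, the player to move claims one currently unoccupied cell (player 1 marks it $X$, player 2 marks it $O$). The first player (if any) to have claimed all $n$ cells of some transversal wins. If the grid becomes completely filled and neither player has claimed a transversal, the game is a draw. *)

From mathcomp Require Import all_boot.
Set Implicit Arguments. Unset Strict Implicit. Unset Printing Implicit Defensive.

Definition cell (n : nat) : finType := ('I_n * 'I_n)%type.

Definition is_transversal (n : nat) (T : {set cell n}) : bool :=
  (#|T| == n) &&
  [forall c in T, forall d in T, (c != d) ==> ((c.1 != d.1) && (c.2 != d.2))].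

Definition claims_transversal (n : nat) (S : {set cell n}) : Prop :=
  exists T : {set cell n}, is_transversal T /\ T \subset S.

(* p1_wins X O : in the position where player 1 has claimed X, player 2 has
   claimed O, neither has yet won, and it is player 1's turn, player 1 has a
   strategy forcing a win (in finitely many moves, against every reply).
   Either player 1 completes a transversal now, or player 1 plays a cell c
   after which the board is not full (otherwise the game is a draw) and, for
   every reply d of player 2, player 2 has not completed a transversal and
   player 1 again has a winning strategy. *)
Inductive p1_wins (n : nat) : {set cell n} -> {set cell n} -> Prop :=
| p1_wins_now (X O : {set cell n}) (c : cell n) :
    c \notin X :|: O -> claims_transversal (c |: X) -> p1_wins X O
| p1_wins_step (X O : {set cell n}) (c : cell n) :
    c \notin X :|: O ->
    (exists d : cell n, d \notin (c |: X) :|: O) ->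
    (forall d : cell n, d \notin (c |: X) :|: O ->
        ~ claims_transversal (d |: O) /\ p1_wins (c |: X) (d |: O)) ->
    p1_wins X O.

Definition transversal_game_p1_wins (n : nat) : Prop :=
  p1_wins (set0 : {set cell n}) set0.

From Pilot Require Import Defs.
From mathcomp Require Import all_boot zify.
From Stdlib Require Strings.String.
Set Implicit Arguments. Unset Strict Implicit. Unset Printing Implicit Defensive.

(* Player 1 opens in a corner; transposing the board if necessary, player 2
   answers in a row R other than the corner's.  Player 1 then maintains a
   k x k block of rows and columns, with R among its rows, such that the block
   holds no stone and player 1's stones form a partial transversal of the
   remaining rows and columns.  Each move of player 1 extends this partial
   transversal by a block cell outside row R chosen so that player 2's last
   stone leaves the shrunken block, until the block is 4 x 4.  Player 1 wins
   the resulting game on the 4 x 4 block, as checked by computer from a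
   certificate (for n = 4 and n = 5 the end game starts at once).  Player 2
   never completes a transversal: he has too few stones before the end game,
   and during it he keeps so few stones outside row R, or outside some other
   line of the block, that he cannot hold a transversal, which has only one
   cell in each row and column. *)

(* [finset] exports an unrelated [is_transversal]. *)
Local Notation is_transversal := Defs.is_transversal.

Section Transversals.
Variable n : nat.
Implicit Types O T : {set cell n}.

Lemma transversal_card T : is_transversal T -> #|T| = n.
Proof. by case/andP=> /eqP. Qed.

Lemma transversal_sep T c d : is_transversal T -> c \in T -> d \in T -> c != d ->
  (c.1 != d.1) && (c.2 != d.2).
Proof.
case/andP=> _ /forall_inP sepT cT dT cd.
by move: (sepT c cT) => /forall_inP /(_ d dT) /implyP; apply.
Qed.

Lemma claims_transversal_card O : claims_transversal O -> n <= #|O|.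
Proof. by case=> T [tT sTO]; rewrite -{1}(transversal_card tT) subset_leq_card. Qed.

Lemma claims_transversal_off_line O (P : pred (cell n)) :
  (forall T, is_transversal T -> #|[set z in T | ~~ P z]| <= 1) ->
  claims_transversal O -> n.-1 <= #|[set z in O | P z]|.
Proof.
move=> line1 [T [tT sTO]].
have splitT : #|[set z in T | P z]| + #|[set z in T | ~~ P z]| = n.
  rewrite -[in RHS](transversal_card tT) -(cardsID [set z | P z] T).
  by congr (_ + _); apply: eq_card => z; rewrite !inE andbC.
have inO : #|[set z in T | P z]| <= #|[set z in O | P z]|.
  apply: subset_leq_card; apply/subsetP => z; rewrite !inE => /andP[zT ->].
  by rewrite (subsetP sTO).
have := line1 T tT; lia.
Qed.

Lemma claims_transversal_off_row O (r : 'I_n) :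
  claims_transversal O -> n.-1 <= #|[set z in O | z.1 != r]|.
Proof.
apply: claims_transversal_off_line => T tT.
rewrite leqNgt; apply/negP => /card_gt1P [a [b [aT bT ab]]].
move: aT bT; rewrite !inE => /andP [aT /negPn/eqP ar] /andP [bT /negPn/eqP br].
by move: (transversal_sep tT aT bT ab); rewrite ar br eqxx.
Qed.

Lemma claims_transversal_off_col O (r : 'I_n) :
  claims_transversal O -> n.-1 <= #|[set z in O | z.2 != r]|.
Proof.
apply: claims_transversal_off_line => T tT.
rewrite leqNgt; apply/negP => /card_gt1P [a [b [aT bT ab]]].
move: aT bT; rewrite !inE => /andP [aT /negPn/eqP ar] /andP [bT /negPn/eqP br].
by move: (transversal_sep tT aT bT ab); rewrite ar br eqxx andbF.
Qed.

End Transversals.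

(* The generated induction principle of [p1_wins] gives no induction
   hypothesis under the conjunction in [p1_wins_step]. *)
Section P1WinsInduction.
Variable n : nat.
Variable P : {set cell n} -> {set cell n} -> Prop.
Hypothesis P_now : forall X O c,
  c \notin X :|: O -> claims_transversal (c |: X) -> P X O.
Hypothesis P_step : forall X O c,
  c \notin X :|: O -> (exists d, d \notin (c |: X) :|: O) ->
  (forall d, d \notin (c |: X) :|: O ->
     ~ claims_transversal (d |: O) /\ P (c |: X) (d |: O)) -> P X O.

Fixpoint p1_wins_nested_ind X O (w : p1_wins X O) {struct w} : P X O :=
  match w with
  | p1_wins_now _ _ _ cXO cX => P_now cXO cX
  | p1_wins_step _ _ _ cXO free next => P_step cXO free
      (fun d dXO => match next d dXO with conj safe w' => conj safe (p1_wins_nested_ind w') end)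
  end.
End P1WinsInduction.

Section Transposition.
Variable n : nat.

Definition tr_cell (c : cell n) : cell n := (c.2, c.1).
Definition tr_set (S : {set cell n}) : {set cell n} := tr_cell @: S.

Lemma tr_cellK : involutive tr_cell. Proof. by case. Qed.
Lemma tr_cell_inj : injective tr_cell. Proof. exact: inv_inj tr_cellK. Qed.

Lemma mem_tr_set S c : (c \in tr_set S) = (tr_cell c \in S).
Proof. by rewrite -{1}(tr_cellK c) mem_imset //; apply: tr_cell_inj. Qed.

Lemma tr_setK : involutive tr_set.
Proof. by move=> S; apply/setP => c; rewrite !mem_tr_set tr_cellK. Qed.

Lemma tr_setU A B : tr_set (A :|: B) = tr_set A :|: tr_set B.
Proof. exact: imsetU. Qed.

Lemma tr_setU1 c S : tr_set (c |: S) = tr_cell c |: tr_set S.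
Proof. exact: imsetU1. Qed.

Lemma tr_set1 c : tr_set [set c] = [set tr_cell c].
Proof. exact: imset_set1. Qed.

Lemma transversal_tr T : is_transversal T -> is_transversal (tr_set T).
Proof.
move=> tT; apply/andP; split.
  by rewrite card_imset ?(transversal_card tT) //; apply: tr_cell_inj.
apply/forall_inP => c; rewrite mem_tr_set => cT.
apply/forall_inP => d; rewrite mem_tr_set => dT; apply/implyP => cd.
rewrite -(inj_eq tr_cell_inj) in cd.
by have /andP [/= -> ->] := transversal_sep tT cT dT cd.
Qed.

Lemma claims_transversal_tr S : claims_transversal S -> claims_transversal (tr_set S).
Proof.
case=> T [tT sTS]; exists (tr_set T); split; first exact: transversal_tr.
by apply/subsetP => c; rewrite !mem_tr_set => /(subsetP sTS).
Qed.

Lemma p1_wins_tr X O : p1_wins X O -> p1_wins (tr_set X) (tr_set O).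
Proof.
elim/p1_wins_nested_ind => {X O} [X O c cXO cX | X O c cXO [d dXO] next].
  apply: (p1_wins_now (c := tr_cell c)); first by rewrite -tr_setU mem_tr_set tr_cellK.
  by rewrite -tr_setU1; apply: claims_transversal_tr.
apply: (p1_wins_step (c := tr_cell c)).
- by rewrite -tr_setU mem_tr_set tr_cellK.
- by exists (tr_cell d); rewrite -tr_setU1 -tr_setU mem_tr_set tr_cellK.
move=> d' d'XO; have [] := next (tr_cell d'); first by rewrite -mem_tr_set tr_setU tr_setU1.
move=> safe w; split; last by move: w; rewrite !tr_setU1 tr_cellK.
by move/claims_transversal_tr; rewrite tr_setU1 tr_setK.
Qed.

End Transposition.

Lemma uniq_map_inj_in (T1 T2 : eqType) (f : T1 -> T2) (s : seq T1) :
  uniq (map f s) -> {in s &, injective f}.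
Proof.
elim: s => [//|a s IH] /= /andP [fa us] x y.
rewrite !inE => /orP [/eqP -> | xs] /orP [/eqP -> | ys] // e.
- by move: fa; rewrite e map_f.
- by move: fa; rewrite -e map_f.
- exact: IH.
Qed.

(* The cells of the 4 x 4 end-game block are numbered [x = 4 * i + j] (block
   row [i], block column [j]).  Player 2's position is summarized by nine
   counters: counter 0 counts all his stones, counter [k] for [1 <= k <= 4] his
   stones outside block row [k - 1], counter [k] for [5 <= k <= 8] his stones
   outside block column [k - 5].  A slack [Some s] means the counter may still
   grow by [s] while staying below the bound that makes a transversal
   impossible; [None] means no such guarantee. *)
Definition slack_pred (o : option nat) : option nat :=
  if o is Some s.+1 then Some s else None.

Definition block_counts (k x : nat) : bool :=
  if k == 0 then true else if k <= 4 then x %/ 4 != k.-1 else x %% 4 != k - 5.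

Definition slack_after (x : nat) (S : seq (option nat)) : seq (option nat) :=
  [seq if block_counts k x then slack_pred (nth None S k) else nth None S k | k <- iota 0 9].

Definition slack_after_outside (S : seq (option nat)) : seq (option nat) :=
  [seq slack_pred (nth None S k) | k <- iota 0 9].

Definition slack_safe (S : seq (option nat)) : bool := has isSome S.

Definition block_transversals : seq (seq nat) :=
  [seq [seq 4 * i + nth 0 p i | i <- iota 0 4] | p <- permutations (iota 0 4)].

Definition completes_block_transversal (M : seq nat) : bool :=
  has (fun t => all (mem M) t) block_transversals.

Fixpoint check_all_replies (check : option nat -> seq nat -> option (seq nat))
    (rs : seq (option nat)) (cert : seq nat) : option (seq nat) :=
  if rs is r :: rs' then
    if check r cert is Some cert' then check_all_replies check rs' cert' else None
  else Some cert.

(* [None] stands for a reply outside the block. *)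
Definition block_replies (outside : bool) (M L : seq nat) : seq (option nat) :=
  (if outside then [:: None] else [::])
  ++ [seq Some x | x <- iota 0 16 & (x \notin M) && (x \notin L)].

(* Player 1, holding the block cells [M] while player 2 holds [L] with slacks
   [S], plays the moves read from [cert], in depth-first order over player 2's
   replies; on success the unread part of [cert] is returned. *)
Fixpoint check_block_win (fuel : nat) (outside : bool) (M L : seq nat)
    (S : seq (option nat)) (cert : seq nat) {struct fuel} : option (seq nat) :=
  if fuel is f.+1 then
    if cert is c :: cert' then
      if (c < 16) && (c \notin M) && (c \notin L) then
        if completes_block_transversal (c :: M) then Some cert'
        else if has (fun x => (x \notin c :: M) && (x \notin L)) (iota 0 16) then
          check_all_replies (fun r cert'' =>
              let L' := if r is Some x then x :: L else L in
              let S' := if r is Some x then slack_after x S else slack_after_outside S in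
              if slack_safe S' then check_block_win f outside (c :: M) L' S' cert'' else None)
            (block_replies outside (c :: M) L) cert'
        else None
      else None
    else None
  else None.

Lemma check_all_replies_sound check rs cert cert' :
  check_all_replies check rs cert = Some cert' ->
  forall r, r \in rs -> exists cert0 cert1, check r cert0 = Some cert1.
Proof.
elim: rs cert => [//|r0 rs IH] cert /=.
case E: (check r0 cert) => [cert1|//] h r; rewrite inE => /orP [/eqP -> | rin].
  by exists cert, cert1.
exact: IH h r rin.
Qed.

Lemma mem_block_replies_inside outside M L x :
  (Some x \in block_replies outside M L) = [&& x < 16, x \notin M & x \notin L].
Proof.
rewrite mem_cat (_ : Some x \in _ = false) ?orFb; last by case: outside.
by rewrite (mem_map (@Some_inj _)) mem_filter mem_iota andbC.
Qed.

Lemma mem_block_replies_outside M L : None \in block_replies true M L.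
Proof. by rewrite mem_cat inE eqxx. Qed.

Definition block_transversal_shape (t : seq nat) : bool :=
  [&& size t == 4, all (fun x => x < 16) t,
      uniq (map (fun x => x %/ 4) t) & uniq (map (fun x => x %% 4) t)].

Lemma block_transversals_shape : all block_transversal_shape block_transversals.
Proof. by vm_compute. Qed.

(* The end-game block has rows [er i] and columns [ec j]; [X0] is player 1's
   partial transversal of the other rows and columns.  Unless [outside], every
   cell of the board lies in the block. *)
Section BlockGame.
Variable n : nat.
Hypothesis n4 : 4 <= n.
Variables (er ec : 'I_4 -> 'I_n).
Hypotheses (er_inj : injective er) (ec_inj : injective ec).
Variable X0 : {set cell n}.
Hypothesis X0_card : #|X0| + 4 = n.
Hypothesis X0_row : forall c i, c \in X0 -> c.1 != er i.
Hypothesis X0_col : forall c j, c \in X0 -> c.2 != ec j.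
Hypothesis X0_sep : forall c d, c \in X0 -> d \in X0 -> c != d -> (c.1 != d.1) && (c.2 != d.2).
Variable outside : bool.
Hypothesis block_full : outside = false -> forall d : cell n, exists i j, d = (er i, ec j).

Implicit Types (O : {set cell n}) (M L : seq nat) (S : seq (option nat)).

Definition block_cell (x : nat) : cell n := (er (inord (x %/ 4)), ec (inord (x %% 4))).
Definition block_cells M : {set cell n} := [set c in map block_cell M].
Definition block_trace O L : Prop := forall x, x < 16 -> (block_cell x \in O) = (x \in L).

Lemma block_cell_inj x y : x < 16 -> y < 16 -> block_cell x = block_cell y -> x = y.
Proof.
have inord4 a b : a < 4 -> b < 4 -> (inord a : 'I_4) = inord b -> a = b.
  by move=> ha hb /(congr1 val); rewrite /= !inordK.
move=> hx hy [/er_inj e_row /ec_inj e_col].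
have e_div : x %/ 4 = y %/ 4 by apply: inord4 e_row; rewrite ltn_divLR.
have e_mod : x %% 4 = y %% 4 by apply: inord4 e_col; rewrite ltn_mod.
by rewrite (divn_eq x 4) (divn_eq y 4) e_div e_mod.
Qed.

Lemma block_cellE (i j : 'I_4) : block_cell (i * 4 + j) = (er i, ec j).
Proof.
rewrite /block_cell divnMDl // modnMDl divn_small // modn_small // addn0.
by rewrite !inord_val.
Qed.

Lemma eq_block_cell x y : x < 16 -> y < 16 -> (block_cell x == block_cell y) = (x == y).
Proof. by move=> hx hy; apply/eqP/eqP => [/(block_cell_inj hx hy)|->]. Qed.

Lemma block_cell_or_outside d :
  (exists2 x, x < 16 & d = block_cell x) \/ (forall x, block_cell x != d).
Proof.
case: (boolP [exists i, exists j, d == (er i, ec j)]) => [|none].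
  case/existsP => i /existsP [j /eqP ->]; left; exists (i * 4 + j); last by rewrite block_cellE.
  by case: i j => [[|[|[|[|i]]]] ?] [[|[|[|[|j]]]] ?].
right=> x; apply: contraNneq none => <-.
by apply/existsP; exists (inord (x %/ 4)); apply/existsP; exists (inord (x %% 4)).
Qed.

Lemma mem_block_cells x M : x < 16 -> all (fun y => y < 16) M ->
  (block_cell x \in block_cells M) = (x \in M).
Proof.
move=> hx hM; rewrite inE; apply/mapP/idP => [[y yM /block_cell_inj e]|xM]; last by exists x.
by rewrite e //; apply: (allP hM).
Qed.

Lemma block_cells_cons c M : block_cells (c :: M) = block_cell c |: block_cells M.
Proof. by apply/setP => z; rewrite !inE. Qed.

Lemma block_cell_notin_X0 x : block_cell x \notin X0.
Proof. by apply/negP => /(X0_row (inord (x %/ 4))); rewrite eqxx. Qed.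

Lemma block_cell_free M L O x : x < 16 -> all (fun y => y < 16) M -> block_trace O L ->
  (block_cell x \notin (X0 :|: block_cells M) :|: O) = (x \notin M) && (x \notin L).
Proof.
move=> hx hM OL.
by rewrite !in_setU !negb_or block_cell_notin_X0 mem_block_cells // OL.
Qed.

Lemma transversal_block t : block_transversal_shape t -> is_transversal (X0 :|: block_cells t).
Proof.
case/and4P => /eqP size_t all16 uniq_rows uniq_cols.
have t16 x : x \in t -> x < 16 by move/(allP all16).
have uniq_cells : uniq (map block_cell t).
  rewrite map_inj_in_uniq ?(map_uniq uniq_rows) // => x y /t16 hx /t16 hy.
  exact: block_cell_inj.
apply/andP; split.
  rewrite cardsU (_ : X0 :&: _ = set0) ?cards0 ?subn0.
    by rewrite cardsE (card_uniqP uniq_cells) size_map size_t X0_card.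
  apply/setP => z; rewrite !inE; apply/negP => /andP [zP /mapP [y _ ze]].
  by move: (block_cell_notin_X0 y); rewrite -ze zP.
apply/forall_inP => a; rewrite !inE => ha; apply/forall_inP => b; rewrite !inE => hb.
case/orP: ha => [aP|/mapP [x xt ->]]; case/orP: hb => [bP|/mapP [y yt ->]]; apply/implyP => ab.
- exact: X0_sep.
- by rewrite /= (X0_row _ aP) (X0_col _ aP).
- by rewrite /= eq_sym (X0_row _ bP) eq_sym (X0_col _ bP).
have xy : x != y.
  by apply/eqP => exy; move: ab; rewrite exy eqxx.
have x4 : x %/ 4 < 4 by rewrite ltn_divLR // t16.
have y4 : y %/ 4 < 4 by rewrite ltn_divLR // t16.
apply/andP; split; apply: contra xy => /eqP.
  move=> /er_inj/(congr1 val); rewrite /= !inordK // => e.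
  by rewrite (uniq_map_inj_in uniq_rows xt yt e).
move=> /ec_inj/(congr1 val); rewrite /= !inordK ?ltn_mod // => e.
by rewrite (uniq_map_inj_in uniq_cols xt yt e).
Qed.

Definition counted (k : nat) (z : cell n) : bool :=
  if k == 0 then true else if k <= 4 then z.1 != er (inord k.-1) else z.2 != ec (inord (k - 5)).
Definition line_count k O : nat := #|[set z in O | counted k z]|.
Definition line_bound (k : nat) : nat := if k == 0 then n.-1 else n.-2.
Definition slack_ok O S : Prop :=
  forall k s, k < 9 -> nth None S k = Some s -> line_count k O + s <= line_bound k.

Lemma line_bound0 : line_bound 0 = n.-1. Proof. by []. Qed.
Lemma line_boundS k : line_bound k.+1 = n.-2. Proof. by []. Qed.

Lemma line_count0 O : line_count 0 O = #|O|.
Proof. by apply: eq_card => z; rewrite !inE andbT. Qed.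

Lemma line_count1 O : line_count 1 O = #|[set z in O | z.1 != er (inord 0)]|.
Proof. by apply: eq_card => z; rewrite !inE. Qed.

Lemma line_count_safe k O : line_count k O <= line_bound k -> ~ claims_transversal O.
Proof.
case: (k =P 0) => [-> | /eqP k0] h cl.
  have := claims_transversal_card cl; move: h; rewrite line_count0 /line_bound /=.
  by set c := #|O|; lia.
move: h; rewrite /line_count /line_bound /counted (negbTE k0) => h.
case: (k <= 4) h => h.
  by have := claims_transversal_off_row (er (inord k.-1)) cl; lia.
by have := claims_transversal_off_col (ec (inord (k - 5))) cl; lia.
Qed.

Lemma line_count_U1 k d O : line_count k (d |: O) <= line_count k O + counted k d.
Proof.
rewrite /line_count; case cd: (counted k d) => /=.
  apply: (@leq_trans #|d |: [set z in O | counted k z]|).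
    apply: subset_leq_card; apply/subsetP => z; rewrite !inE => /andP [/orP [->|->] ->] //.
    by rewrite orbT.
  by rewrite cardsU1 addnC leq_add2l leq_b1.
rewrite addn0; apply: subset_leq_card; apply/subsetP => z.
rewrite !inE => /andP [/orP [/eqP ->|->] cz] //.
by rewrite cz in cd.
Qed.

Lemma counted_block_cell k x : x < 16 -> k < 9 -> counted k (block_cell x) = block_counts k x.
Proof.
move=> hx hk; rewrite /counted /block_counts; case: eqP => // k0; case: ifP => k4.
  by rewrite (inj_eq er_inj) -(inj_eq val_inj) /= !inordK ?ltn_divLR //; lia.
by rewrite (inj_eq ec_inj) -(inj_eq val_inj) /= !inordK ?ltn_mod //; lia.
Qed.

Lemma slack_pred_Some o s : slack_pred o = Some s -> o = Some s.+1.
Proof. by case: o => [[|m]|] //= [->]. Qed.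

Lemma slack_after_ok O S x : x < 16 -> slack_ok O S ->
  slack_ok (block_cell x |: O) (slack_after x S).
Proof.
move=> hx ok k s hk; rewrite (nth_map 0) ?size_iota // nth_iota // add0n.
have := line_count_U1 k (block_cell x) O; rewrite counted_block_cell //.
by case: (block_counts k x) => h; [move/slack_pred_Some | ]; move/(ok _ _ hk); lia.
Qed.

Lemma slack_after_outside_ok O S d : slack_ok O S -> slack_ok (d |: O) (slack_after_outside S).
Proof.
move=> ok k s hk; rewrite (nth_map 0) ?size_iota // nth_iota // add0n.
move=> /slack_pred_Some /(ok _ _ hk); have := line_count_U1 k d O; case: (counted k d); lia.
Qed.

Lemma slack_safe_ok O S : slack_safe S -> size S = 9 -> slack_ok O S -> ~ claims_transversal O.
Proof.
case/hasP => o /(nthP None) [k hk <-]; case E: (nth None S k) => [s|//] _ sizeS ok.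
apply: (line_count_safe (k := k)); rewrite sizeS in hk; have := ok _ _ hk E; lia.
Qed.

Lemma claims_block_transversal M :
  completes_block_transversal M -> claims_transversal (X0 :|: block_cells M).
Proof.
case/hasP => t /(allP block_transversals_shape) shape_t /allP tM.
exists (X0 :|: block_cells t); split; first exact: transversal_block.
by apply/setUS/subsetP => z; rewrite !inE => /mapP [y /tM yM ->]; rewrite map_f.
Qed.

Lemma block_trace_inside O L x : x < 16 -> block_trace O L ->
  block_trace (block_cell x |: O) (x :: L).
Proof.
by move=> hx OL y hy; rewrite !inE OL // eq_block_cell.
Qed.

Lemma block_trace_outside O L d : (forall x, block_cell x != d) -> block_trace O L ->
  block_trace (d |: O) L.
Proof. by move=> out OL y hy; rewrite in_setU1 (negbTE (out y)) OL. Qed.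

Lemma check_block_win_sound fuel M L S cert cert' :
  check_block_win fuel outside M L S cert = Some cert' ->
  forall O, all (fun x => x < 16) M -> block_trace O L -> slack_ok O S ->
  p1_wins (X0 :|: block_cells M) O.
Proof.
elim: fuel M L S cert cert' => [//|f IH] M L S [//|c cert] cert'; cbn [check_block_win].
case: ifP => // /andP [/andP [c16 cM] cL] check_c O M16 OL ok.
have M16' : all (fun x => x < 16) (c :: M) by rewrite /= c16.
have free x : x < 16 ->
    (block_cell x \notin (block_cell c |: (X0 :|: block_cells M)) :|: O)
    = (x \notin c :: M) && (x \notin L).
  by move=> hx; rewrite setUCA -block_cells_cons (block_cell_free hx M16' OL).
have c_free : block_cell c \notin (X0 :|: block_cells M) :|: O.
  by rewrite (block_cell_free c16 M16 OL) cM.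
move: check_c; case: ifP => [win _ | _].
  apply: (p1_wins_now c_free).
  by rewrite setUCA -block_cells_cons; apply: claims_block_transversal.
case: ifP => // /hasP [x0 /[!mem_iota] x016 x0_free] /check_all_replies_sound replies.
apply: (p1_wins_step c_free); first by exists (block_cell x0); rewrite free.
rewrite setUCA -block_cells_cons => d.
have [[x x16 ->] | out] := block_cell_or_outside d => d_free.
  have /replies [cert0 [cert1]] : Some x \in block_replies outside (c :: M) L.
    by rewrite mem_block_replies_inside x16 -free // setUCA -block_cells_cons.
  case: ifP => // safe next.
  have ok' := slack_after_ok x16 ok.
  split; first exact: slack_safe_ok safe (size_map _ _) ok'.
  exact: IH next _ M16' (block_trace_inside x16 OL) ok'.
have outside_true : outside = true.
  case: outside block_full replies => // /(_ erefl d) [i [j dE]] _.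
  by have := out (i * 4 + j); rewrite block_cellE dE eqxx.
have /replies [cert0 [cert1]] : None \in block_replies outside (c :: M) L.
  by rewrite outside_true mem_block_replies_outside.
case: ifP => // safe next.
have ok' := slack_after_outside_ok d ok.
split; first exact: slack_safe_ok safe (size_map _ _) ok'.
exact: IH next _ M16' (block_trace_outside out OL) ok'.
Qed.

End BlockGame.

Lemma enum_with_prefix n m (A : {set 'I_n}) (pre : seq 'I_n) (z0 : 'I_n) :
  #|A| = m.+1 -> uniq pre -> {subset pre <= A} ->
  exists f : 'I_m.+1 -> 'I_n, [/\ injective f, (forall i, f i \in A),
    (forall z, z \in A -> exists i, f i = z)
    & (forall k, k < size pre -> f (inord k) = nth z0 pre k)].
Proof.
move=> cardA uniq_pre pre_A.
set s := pre ++ [seq z <- enum A | z \notin pre].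
have uniq_s : uniq s.
  rewrite cat_uniq uniq_pre filter_uniq ?enum_uniq //= andbT.
  by apply/hasPn => z; rewrite mem_filter => /andP [].
have mem_s z : (z \in s) = (z \in A).
  rewrite mem_cat mem_filter mem_enum; case zp: (z \in pre) => //=.
  by rewrite (pre_A _ zp).
have size_s : size s = m.+1.
  rewrite -cardA cardE; apply: perm_size; apply: uniq_perm; rewrite ?enum_uniq // => z.
  by rewrite mem_s mem_enum.
exists (fun i => nth z0 s i); split.
- move=> i j /eqP; rewrite nth_uniq ?size_s // => /eqP e; exact: val_inj.
- by move=> i; rewrite -mem_s mem_nth // size_s.
- move=> z; rewrite -mem_s => zs; exists (inord (index z s)).
  by rewrite inordK ?nth_index // -size_s index_mem.
- move=> k hk; rewrite inordK; first by rewrite nth_cat hk.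
  by apply: leq_trans hk _; rewrite -size_s size_cat leq_addr.
Qed.

Lemma line_count_le_card n (er ec : 'I_4 -> 'I_n) k (O : {set cell n}) :
  line_count er ec k O <= #|O|.
Proof. by apply: subset_leq_card; apply/subsetP => z; rewrite inE => /andP []. Qed.

Lemma p1_wins_block_game n (n4 : 4 <= n) (Ur Uc : {set 'I_n}) (preR preC : seq 'I_n)
    (X O : {set cell n}) outside L S cert (z0 : 'I_n) :
  #|Ur| = 4 -> #|Uc| = 4 -> uniq preR -> uniq preC ->
  {subset preR <= Ur} -> {subset preC <= Uc} ->
  #|X| + 4 = n -> (forall c, c \in X -> (c.1 \notin Ur) && (c.2 \notin Uc)) ->
  (forall c d, c \in X -> d \in X -> c != d -> (c.1 != d.1) && (c.2 != d.2)) ->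
  (outside = false -> forall d : cell n, (d.1 \in Ur) && (d.2 \in Uc)) ->
  check_block_win 17 outside [::] L S cert = Some [::] ->
  (forall er ec : 'I_4 -> 'I_n, injective er -> injective ec ->
     (forall i, er i \in Ur) -> (forall i, ec i \in Uc) ->
     (forall k, k < size preR -> er (inord k) = nth z0 preR k) ->
     (forall k, k < size preC -> ec (inord k) = nth z0 preC k) ->
     block_trace er ec O L /\ slack_ok er ec O S) ->
  p1_wins X O.
Proof.
move=> cardUr cardUc uniqR uniqC subR subC cardX X_out X_sep full check enum_ok.
have [er [er_inj er_Ur er_onto er_pre]] := enum_with_prefix z0 cardUr uniqR subR.
have [ec [ec_inj ec_Uc ec_onto ec_pre]] := enum_with_prefix z0 cardUc uniqC subC.
have [trace ok] := enum_ok er ec er_inj ec_inj er_Ur ec_Uc er_pre ec_pre.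
have -> : X = X :|: block_cells er ec [::] by apply/setP => z; rewrite !inE orbF.
apply: (check_block_win_sound n4 er_inj ec_inj cardX _ _ X_sep _ check) => //.
- by move=> c i /X_out /andP [cUr _]; apply: contraNneq cUr => ->.
- by move=> c j /X_out /andP [_ cUc]; apply: contraNneq cUc => ->.
move=> /full inside d; have /andP [d1 d2] := inside d.
have [i ei] := er_onto _ d1; have [j ej] := ec_onto _ d2.
by exists i, j; rewrite ei ej; case: d {inside d1 d2 ei ej}.
Qed.

Definition hex_digit (a : Ascii.ascii) : nat :=
  let k := Ascii.nat_of_ascii a in if k < 58 then k - 48 else k - 87.
Definition hex_digits (s : String.string) : seq nat :=
  map hex_digit (String.list_ascii_of_string s).

(* Player 1's block moves, found by computer search, in the order in which
   [check_block_win] reads them. *)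
Section Certificates.
Import String.StringSyntax.
Local Open Scope string_scope.

Definition cert_full : seq nat := hex_digits
  "06bdddddddde55977f7777555555dd9ffffffffffdbbbbbb7aaaaeaabbbdddddddde55977f7777555555dd39cccccfccc9cccccfccc9cccccfccc9cccccfcccd888b888889cccccfccc9cccccfcccd888b888889ccccccfcc9ccccccfccd888b888889ffffffffffdbbbbbb3888c888bbbdddddddde5559777f77755555dddbbbbbbb38888a47444448888bbbbdddddddde5559777f77755555dd9ffffffffffc37e22222233333339ffffffffff7eeeeeeeedaaaaaba9ffffffffff3ccccccce4744444c9ffffffffff3cccccccd8888b88cdbbbbbbbb837a2222223333333bb5beeeeeeeeed66a77f7777666666eaffffffffffd777b66e666677777beeeeeeeeed66a77f7777666666e3acccccfcccacccccfcccacccccfcccacccccfcccacccccfccce888b88888acccccfccce888b88888accccccfccaccccccfcce888b88888affffffffffebbbbbb3888c888bbbeeeeeeeeed666a777f77766666ebeeeeeeeeed666a777f77766666eebbbbbbb38888947444448888bbbaffffffffffc37d1111113333333affffffffff7ddddddde99999b9daffffffffff3ccccccce8888b88caffffffffff3cccccccd4744444cebbbbbbbb83791111113333333bb5affffffffffd777b66e666677777affffffffffd777b66e666677777affffffffffd777b66e666677777affffffffffebbbbbb79999d99bb2bcccccecccbcccccecccbcccccecccbcccccecccbcccccecccbcccccecccf888a88888f888a88888bcccccceccf888a88888bcccccceccaffffffffffd7777b666e6667777affffffffffd7777b666e6667777beeeeeeeeec26d1111112222222efaaaaaaa28888946444448888aaaaffffffffff7ddddddde99999b9dbeeeeeeee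e2cccccccf8888a88cefaaaaaaa82691111112222222aaabeeeeeeeeee2cccccccd4644444c9e7777b556dddddfd5555557777777eeeeeeeeedaaaaa6bbbbfbbaaae6ffffffffffdbbbbbb7aaaaeaabbc63f333333363f333333372e222222272e2222222633f333333633f333333633f333333633f333333633f333333633f33333372e22222227eeeeeeeeec2ad1111112222222e6ffffffffffc33bd111111333333e77777b5556dddddfd55555777777eeeeeeeeec263f333332222222e6ffffffffffc3372e222223333336ffffffffff7eeeeeeeedaaaaaba6ffffffffff7eeeeeeeec23222226ffffffffff3cccccccd8888b88c7eeeeeeeeee2cccccccd8888a88c639cccccfccc9cccccfccc9cccccfccc9cccccfcccd888b888889cccccfccc9cccccfcccd888b888889ccccccfcc9ccccccfccd888b88888bddddddddc9f33333311111111dd9ffffffffffdbbbbbb7aaaaeaabbbddddddddc93f3333311111111dd9ffffffffffc33bd111111333333bddddddddc93f3333311111111dddbbbbbbb38888a44744448888bbbbddddddddc93f3333311111111dd9ffffffffffc3372e222223333339ffffffffff7eeeeeeeedaaaaaba9ffffffffff3ccccccce4474444c9ffffffffff3cccccccd8888b88cdbbbbbbbb83372a22222333333bb5beeeeeeeeecaf33333322222222e3acccccfcccacccccfcccacccccfcccacccccfcccacccccfccce888b88888acccccfccce888b88888accccccfccaccccccfcce888b88888affffffffffebbbbbb79999d99bbbeeeeeeeeec2a3f333332222222eaffffffffffc33b2e22222333333beeeeeeeeec2a3f333332222222ebeeeeeeeeec2a3f333332222222eebbbbbbb38888944744448888bbbaffffffffffc337d111111333333affffffffff7ddddddde99999b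9daffffffffff3ccccccce8888b88caffffffffff3cccccccd4474444cebbbbbbbb83379111111333333bb5affffffffffc3be2222223333333affffffffffebbbbbb3888c888bb2bcccccecccbcccccecccbcccccecccbcccccecccbcccccecccbcccccecccf888a88888f888a88888bcccccceccf888a88888bcccccceccaffffffffffc33b2e22222333333affffffffffc33b2e22222333333affffffffffc33b2e22222333333affffffffffc33b2e22222333333beeeeeeeeec26d1111112222222efaaaaaaa28888944644448888aaabeeeeeeeee6dddddddf99999a9deaffffffffff3ccccccce8888b88cfaaaaaaa82691111112222222aaabeeeeeeeeee2cccccccd4464444c5ebbbbbbb79999adddddfd9999bbbbeeeeeeeeed666a777f77766666eaffffffffffd7777b666e6667777ebbbbbbb79999adddddfd9999bbbbeeeeeeeeec2a3f333332222222eaffffffffffc33b2e22222333333ca3f3333333a3f3333333b2e2222222a33f333333a33f333333a33f333333b2e2222222a33f333333a33f333333a33f333333b2e2222222beeeeeeeeec26d1111112222222eaffffffffffc337d111111333333affffffffff7ddddddde99999b9daffffffffffbeeeeeeeec2322222affffffffff3cccccccd4474444cbeeeeeeeeee2cccccccd4464444c5ebbbbbbb38888accccfcc8888bbbbeeeeeeeeed666a777f77766666eaffffffffffd7777b666e6667777ebbbbbbb38888accccfcc8888bbbbeeeeeeeeec2a3f333332222222eaffffffffffc33b2e22222333333ca3f3333333a3f3333333b2e2222222a33f333333a33f333333a33f333333b2e2222222a33f333333a33f333333a33f333333b2e2222222beeeeeeeeec26d1111112222222eaffffffffffc337d111111333333affffffffffbeeeeeeeed6666766affffffffff3ccccccc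e88888b8caffffffffff3cccccccd4474444cbeeeeeeeeee2cccccccd4464444c6bdddddddde5559777f77755555dddbbbbbbb388889ccccfcc8888bbb9ffffffffffe7777b555d5557777dbbbbbbb388889ccccfcc8888bbbbddddddddc93f3333311111111dd9ffffffffffc33bd111111333333c93f333333393f3333333bd11111111933f333333933f333333933f333333bd11111111933f333333933f333333933f333333bd11111111bddddddddc5e22222211111111dd9ffffffffffc3372e222223333339ffffffffffbddddddde5555755d9ffffffffff3ccccccce4474444c9ffffffffff3cccccccd88888b8cbddddddddd1ccccccce4454444cd7addddddddf5559666e66655555dd9eeeeeeeeef6666a555d5556666edaaaaaaa288889ccccecc8888aaadaaaaaaa288889ccccecc8888aaaaddddddddc9e22222211111111dd9eeeeeeeeec2ad1111112222222ec9e22222222ad1111111192e222222292e222222292e222222292e2222222ad1111111192e222222292e2222222ad1111111192e2222222addddddddc53f3333311111111dd9eeeeeeeeec263f333332222222e9eeeeeeeeeadddddddf5555655de9eeeeeeeee2cccccccf4464444ceaddddddddd1cccccccf4454444cd9eeeeeeeeee2cccccccd88888a8c5affffffffff7ddddddde99999b9daffffffffff7ddddddde99999b9daffffffffff7ddddddde99999b9daffffffffff7ddddddde99999b9daffffffffff7ddddddde99999b9dbeeeeeeeee6dddddddf99999a9deaffffffffff7ddddddde99999b9daffffffffffbeeeeeeeed6666766ebbbbbbbb38888894474444888bbfaaaaaaaa28888894464444888aa8e3b3333333e3b3333333f2a2222222e33b333333e33b333333e33b333333e33b333333e33b333333f2a2222222f2a2222222e33b333333faaaaaaaa8269111111222222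2aaebbbbbbbbb83379111111333333b5affffffffff3ccccccce8888b88caffffffffff3ccccccce8888b88cbeeeeeeeee2cccccccf8888a88ceaffffffffff3ccccccce8888b88caffffffffff3ccccccce8888b88caffffffffff3ccccccce8888b88caffffffffffbeeeeeeeec2322222affffffffff3ccccccce88888b8cebbbbbbbb38888894474444888bbfaaaaaaaa28888894464444888aa8e3b3333333e3b3333333f2a2222222e33b333333e33b333333e33b333333e33b333333e33b333333f2a2222222f2a2222222e33b333333faaaaaaaa82691111112222222aaebbbbbbbbb83379111111333333b69ffffffffff3cccccccd8888b88c9ffffffffff3cccccccd8888b88cbddddddddd1cccccccf8888988cd9ffffffffff3cccccccd8888b88c9ffffffffff3cccccccd8888b88c9ffffffffff3cccccccd8888b88c9ffffffffffbddddddddc3111111dbbbbbbbb388888a4474444888bb9ffffffffff3cccccccd88888b8cf9999999188888a44544448889998d3b3333333d3b3333333f911111111d33b333333d33b333333d33b333333d33b333333d33b333333f911111111f911111111d33b333333f999999985a22222211111111999dbbbbbbbbb83372a22222333333b79eeeeeeeeee2cccccccd8888a88caddddddddd1ccccccce8888988cd9eeeeeeeeee2cccccccd8888a88c9eeeeeeeeee2cccccccd8888a88c9eeeeeeeeee2cccccccd8888a88c9eeeeeeeeee2cccccccd8888a88c9eeeeeeeeeeaddddddddc2111111daaaaaaa288888b4464444888aaae9999999188888b44544448889999eeeeeeeeee2cccccccd88888a8c8da22222222e911111111d2a2222222d2a2222222d2a2222222d2a2222222d2a2222222e911111111d2a2222222e911111111d2a2222222e9999999853b3333311111111999daaaaa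aaa8263b333332222222aa".
Definition cert_five_inside : seq nat := hex_digits
  "16bccccccccce44487777f77774444444cccbcccccccce448777f77774444444ccc8fffffffffffcbbbbbbb7aaaaaeaabb38ddddddddfdd8dddddddfdd8dddddddfdd8dddddddfddc9999b999998dddddddfdd8dddddddfdd8dddddddfdd8dddddddfddc99999b99998ddddddddfdc99999b9999bcccccccce4448777f7777444444ccc8fffffffffffcbbbbbbb39999d999bbcbbbbbbbb399999a555755559999bbbbcccccccce44487777f777444444cccbcccccccce44487777f777444444ccc8fffffffffffd3372e22222233333338fffffffffff3dddddddde55575555d8fffffffffff7eeeeeeeeecaaaaaaba8fffffffffff3dddddddddc99999b99cbbbbbbbbb93372a2222223333333bb4beeeeeeeeeec666a777f7777666666eaffffffffff7cccccce888b888ccbeeeeeeeeec66a77f7777666666e3adddddddfddaddddddfddaddddddfddaddddddfddaddddddfdde9999b9999addddddfddaddddddfdde9999b9999adddddddfde9999b9999affffffffffebbbbbb39999d99bbbeeeeeeeeec666a777f77766666ebeeeeeeeeec666a777f77766666eebbbbbbb39999985755555999bbbaffffffffffc777735d555557777affffffffff3ddddddde99999b9daffffffffff7ccccccce8888b88caffffffffff3ddddddddc5755555ebbbbbbbb87777359555557777bb4afffffffffffc7777b666e666677777affffffffff7cccccce888b888ccaffffffffffc777b66e666677777affffffffffebbbbbb7888c888bb2bdddddddeddbddddddeddbddddddeddbddddddeddbddddddeddbddddddeddf9999a9999bddddddeddf9999a9999f9999a9999bdddddddedaffffffffffc7777b666e6667777affffffffffc7777b666e6667777beeeeeeeeec6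6625d5555566666efaaaaaaa29999985655555999aaabeeeeeeeee2dddddddf99999a9deaffffffffff7ccccccce8888b88cfaaaaaaa86662595555566666aaabeeeeeeeeee2ddddddddc56555558e777773556ddddddfd55555557777777eeeeeeeeecaaaaa6bbbbfbbaaae6ffffffffffcbbbbbb7aaaaeaabbc6bbbbbbfbbb6bbbbbfbbb6bbbbbfbbb7aaaaeaaaa6bbbbbfbbb6bbbbbfbbb6bbbbbfbbb7aaaaaeaaa6bbbbbbfbb6bbbbbbfbb7aaaaaeaaa7eeeeeeeeecaaaaa2999d999aaae6ffffffffffcbbbbbb3999d999bbe777773556dddddfd555555777777eeeeeeeeed263f333332222222e6ffffffffffd3372e222223333336ffffffffff3ddddddde5575555d6ffffffffff7eeeeeeeecaaaaaba6ffffffffff3ddddddddc9999b997eeeeeeeeee2ddddddddc9999a996bcccccccce4448777f7777444444cccbccccccce44877f7777444444ccc8ffffffffffcbbbbbb7aaaaeaabb38dddddddfdd8ddddddfdd8ddddddfddc999b999998ddddddfdd8ddddddfdd8ddddddfdd8ddddddfddc9999b99998dddddddfdc9999b99998ffffffffffcbbbbbb3999d999bbcbbbbbbb7aaaaa92322222aaabbbbccccccce4448777f77744444cccbccccccce4448777f77744444ccc8ffffffffffd3372e222223333338ffffffffff7eeeeeeeed23222228ffffffffff7eeeeeeeecaaaaaba8ffffffffff3ddddddddc9999b99cbbbbbbbb93372a22222333333bb4beeeeeeeeeed2a3f33333322222222e3adddddddfddaddddddfddaddddddfddaddddddfddaddddddfdde9999b9999addddddfddaddddddfdde9999b9999ad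ddddddfde9999b9999affffffffffebbbbbb7888c888bbbeeeeeeeeed2a3f333332222222eaffffffffffd33b2e22222333333beeeeeeeeed2a3f333332222222ebeeeeeeeeed2a3f333332222222eebbbbbbb39999985575555999bbbaffffffffffc7777355d55557777affffffffff3ddddddde99999b9daffffffffff7ccccccce8888b88caffffffffff3ddddddddc5575555ebbbbbbbb87777355955557777bb4afffffffffffd33b2e2222223333333affffffffffebbbbbb39999d99bb2bdddddddeddbddddddeddbddddddeddbddddddeddbddddddeddbddddddeddf9999a9999bddddddeddf9999a9999f9999a9999bdddddddedaffffffffffd33b2e22222333333affffffffffd33b2e22222333333affffffffffd33b2e22222333333affffffffffd33b2e22222333333beeeeeeeeec6666255d55556666efaaaaaaa29999985565555999aaaaffffffffff3ddddddde99999b9dbeeeeeeeee6cccccccf8888a88cefaaaaaaa86666255955556666aaabeeeeeeeeee2ddddddddc55655554ebbbbbbbb399999addddddfd9999bbbbeeeeeeeeec666a777f77766666eaffffffffffc7777b666e6667777ebbbbbbb39999adddddfd9999bbbbeeeeeeeeed2a3f333332222222eaffffffffffd33b2e22222333333ca77777f7777a7777f7777a7777f7777a7777f7777a7777f7777b6666e6666b6666e6666a77777f777a77777f777a77777f777b6666e6666beeeeeeeeec6666255d55556666eaffffffffffc77777355d5555777affffffffff3ddddddde99999b9daffffffffffbeeeeeeeec6666766affffffffff3ddddddddc5575555beeeeeeeeee2ddddddddc55655554ebbbbbbbb788888acccccfcc8888bbbbeeeeeeeeec666a777f77766666eaffffffffffc7777b666e6667777ebbbbbbb78888accccfcc8888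bbbbeeeeeeeeed2a3f333332222222eaffffffffffd33b2e22222333333ca77777f7777a7777f7777a7777f7777a7777f7777a7777f7777b6666e6666b6666e6666a77777f777a77777f777a77777f777b6666e6666beeeeeeeeec6666255d55556666eaffffffffffc77777355d5555777affffffffffbeeeeeeeed2322222affffffffff7ccccccce88888b8caffffffffff3ddddddddc5575555beeeeeeeeee2ddddddddc556555587eeeeeeeeeed263f33333322222222e36dddddddfdd6ddddddfdd6ddddddfdde5575555556ddddddfdd6ddddddfdd6ddddddfdd6ddddddfdde5575555556dddddddfde5575555556ffffffffffe7777b44c444477777eeeeeeeeed263f333332222222e7eeeeeeeeed263f333332222222ee777773555499b999955555777776ffffffffffcbbbbbb39999d99bb7eeeeeeeeed263f333332222222e6ffffffffffd3372e222223333336ffffffffff3ddddddde5557555d6ffffffffffbccccccce4447444c6ffffffffff3ddddddddc99999b9e7777774bbbbbb35595555bb777786fffffffffffd3372e22222233333336ffffffffffe7777355d5555777727dddddddedd7ddddddedd7ddddddedd7ddddddeddf5565555557ddddddedd7ddddddedd7ddddddeddf556555555f5565555557ddddddded6ffffffffffd3372e222223333336ffffffffffd3372e222223333337eeeeeeeeecaaaaaa29999d99aaef666662555499a999955555666666ffffffffffd3372e222223333336ffffffffffd3372e222223333336ffffffffff3ddddddde5557555d7eeeeeeeeeacccccccf4446444cef666664aaaaaa25595555aa666667eeeeeeeeee2ddddddddc99999a94afffffffffff3dddddddde999999b9daffffffffff3ddddddde99999b9dbeeeeeeeee2dddddddf99999a9deaffffffffff3ddddddde99999b9daffffffffff3d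dddddde99999b9daffffffffff3ddddddde99999b9daffffffffff3ddddddde99999b9daffffffffffbeeeeeeeed2322222ebbbbbbbb39999998557555599bbfaaaaaaaa29999998556555599aa8e77777b7777e7777b7777e7777b7777e7777b7777e7777b7777f6666a6666e77777b777e77777b777f6666a6666f6666a6666e77777b777faaaaaaaa86666255955556666aaebbbbbbbbb87777735595555777b4afffffffffff7cccccccce88888b88caffffffffff7ccccccce8888b88caffffffffff7ccccccce8888b88caffffffffff7ccccccce8888b88caffffffffff7ccccccce8888b88cbeeeeeeeee6cccccccf8888a88ceaffffffffffbeeeeeeeec6666766affffffffff7ccccccce88888b8cebbbbbbbb39999998557555599bbfaaaaaaaa29999998556555599aa8e77777b7777e7777b7777e7777b7777e7777b7777e7777b7777f6666a6666e77777b777e77777b777f6666a6666f6666a6666e77777b777faaaaaaaa86666255955556666aaebbbbbbbbb87777735595555777bc7aaaaaaaa9263b33333322222222aaa3699999b999969999b999969999b9999a55755555569999b999969999b9999a557555555699999b999a557555555699999b999699999b9996bbbbbbbba7777f44844447777bb7aaaaaaa9263b333332222222aaa7aaaaaaa9263b333332222222aaaa7777735554dddddfd55555777776bbbbbbbb8ffffffff39999d99bb6bbbbbbbb399999a5557555999bb6bbbbbbbbf888888a444744488bb6bbbbbbbb39999998dddddfd99bba7777774ffffffff355d555577777aaaaaaaa9263b333332222222aa6bbbbbbbbb93372a22222333333bc6bbbbbbbbb93372a2222223333333bb6bbbbbbbba7777355955557777bb2799999a999979999a999979999a999979999a9999b55655555579999a9999b556555555b556555555799999a999799999a999799999a9996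bbbbbbbb93372a22222333333bb6bbbbbbbb93372a22222333333bb7aaaaaaa8eeeeeeee29999d99aaab6666625554ddddded55555666666bbbbbbbb399999a5557555999bb7aaaaaaae888888b444644488aaab666664eeeeeeee255d5555666667aaaaaaaa29999998ddddded99aa6bbbbbbbbb93372a22222333333b6bbbbbbbbb93372a22222333333b".
Definition cert_five_outside : seq nat := hex_digits
  "49e33337018888b8888800000000003333333332ffffffffffffe33b1d1111111333333332ffffffffffffe3370c0000000333333333eeeeeeeeeeec6666a555d55555666666e2ffffffffffffc77777b555d5555577777e3333701888b88888000000000333333333eeeeeeeeeeedaaaaaaa2bbbbbbfbbaaae2ffffffffffffdbbbbbbbb3aaaaaaeaabbe3333702ccccccfcc000000000333333333eeeeeeeeeeec6666627777f777766666e2ffffffffffffc77777736666e666677772ffffffffffff3eeeeeeeeeedaaaaaaaba2ffffffffffff3eeeeeeeeeec6666766662ffffffffffff7cccccccccd888888b88c3eeeeeeeeeeee6cccccccccd888888a88c1affffffffffffd33b2e222222233333333afffffffffff3ddddddddc57555555dafffffffffff7ccccccce8888b888ccafffffffffffd33b2e2222223333333afffffffffffd33b2e2222223333333afffffffffffd33b2e2222223333333afffffffffffd33b2e2222223333333afffffffffffd33b2e2222223333333beeeeeeeeeec6666255d5555566666eafffffffffffc77777355d555557777afffffffffff3dddddddde999999b9dafffffffffff7cccccccce88888b88cafffffffffff3dddddddddc55755555beeeeeeeeeee2dddddddddc5565555529ffffffffffffe3370c0000000333333339fffffffffff3eeeeeeeeec667666669fffffffffff7cccccccd8888b888cc9f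ffffffffffe3370c00000033333339fffffffffffe3370c00000033333339fffffffffffdbbbbbbb3aaaaaeaabb9fffffffffffe3370c0000003333333dbbbbbbbb3aaaaaa866676666aaabbb9fffffffffffe3370c00000033333339fffffffffffc777773666e666677779fffffffffff3eeeeeeeeedaaaaaaba9fffffffffff3eeeeeeeeec666766669fffffffffff7ccccccccd88888b88cdbbbbbbbbb8777773666a66667777bb1affffffffffffd3370c000000033333333afffffffffff3ddddddddc57555555dafffffffffff7ccccccce8888b888ccafffffffffffd3370c0000003333333afffffffffffd3370c0000003333333afffffffffffebbbbbbb399999d99bbafffffffffffd3370c0000003333333afffffffffffd3370c0000003333333ebbbbbbbb3999999855755555999bbbafffffffffffc77777355d555557777afffffffffff3dddddddde999999b9dafffffffffff7cccccccce88888b88cafffffffffff3dddddddddc55755555ebbbbbbbbb8777773559555557777bb1affffffffffffc77777b6666e666677777afffffffffff7ccccccce8888b888ccafffffffffff7ccccccce8888b888ccafffffffffffc7777b666e666677777afffffffffffebbbbbbb78888c888bbbeeeeeeeeeed2260c0000002222222eafffffffffffc77777b6666e6667777afffffffffffc77777b6666e6667777beeeeeeeeeec6666255d5555566666efaaaaaaaa2999999855655555999aaabeeeeeeeeee2ddddddddf999999a9deafffffffffff7cccccccce88888b88cfaaaaaaaa8666625595555566666aaabeeeeeeeeeee2dddddddddc556555552bdddddddddde11933f33333311111111dd9fffffffffffe33b1d11111133333339fffffffffffe3370c00000033333339fffffffffffdbbbbbbb78888c888bbbddddddddde11933f333331111111dd9fffffffffffdbbbbbbb3aaaaaeaabbb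ddddddddde11933f333331111111dddbbbbbbbb3aaaaaa866676666aaabbbbddddddddde11933f333331111111dd9fffffffffffc777773666e666677779fffffffffff3eeeeeeeeedaaaaaaba9fffffffffff3eeeeeeeeec666766669fffffffffff7ccccccccd88888b88cdbbbbbbbbb8777773666a66667777bb1beeeeeeeeeeed22a33f33333322222222eafffffffffffd33b2e2222223333333afffffffffffd3370c0000003333333afffffffffffebbbbbbb78888c888bbbeeeeeeeeeed22a33f333332222222eafffffffffffd333b22e22222333333beeeeeeeeeed22a33f333332222222ebeeeeeeeeeed22a33f333332222222eebbbbbbbb3999999855575555999bbbafffffffffffc777773555d55557777afffffffffff3dddddddde999999b9dafffffffffff7cccccccce88888b88cafffffffffff3dddddddddc55575555ebbbbbbbbb8777773555955557777bb1affffffffffffd333b22e2222223333333afffffffffffd33b2e2222223333333afffffffffffebbbbbbb399999d99bbbeeeeeeeeeed2260c0000002222222eafffffffffffd333b22e22222333333afffffffffffd333b22e22222333333afffffffffffd333b22e22222333333afffffffffffd333b22e22222333333beeeeeeeeeec666662555d55556666efaaaaaaaa2999999855565555999aaaafffffffffff3dddddddde999999b9dbeeeeeeeeee6ccccccccf88888a88cefaaaaaaaa8666662555955556666aaabeeeeeeeeeee2dddddddddc555655559e3333702ccccccfcc000000000333333332fffffffffffe33b1d11111133333332fffffffffffe3370c00000033333333eeeeeeeeeec6666a555d555566666e2fffffffffffc77777b555d55557777e3333702cccccfcc0000000033333333eeeeeeeeeedaaaaaa2bbbbbfbbaaae2fffffffffffdbbbbbbb3aaaaaeaabb3eeeeee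eeeec6666627777f7776666e2fffffffffffc77777736666e6667772fffffffffff3eeeeeeeeedaaaaaaba2fffffffffff3eeeeeeeeec666676662fffffffffffbdddddddddc555575553eeeeeeeeeeeadddddddddc55556555a3ddddddddddc555517777f7777555555dd1fffffffffffd33b2e2222223333333d33307777b2622222277777333333331fffffffffffd3370c00000033333331fffffffffffc77777b6666e6667777d3333701cccccfcc0000000033333333dddddddddc55551777f777755555dd1fffffffffffd333b22e222223333333dddddddddc555517777f77755555dd1fffffffffffc7777773555d55557771fffffffffffbeeeeeeeeed223222221fffffffffff7cccccccce888888b8c1fffffffffff3dddddddddc55575555d3333077777b226222227777333333393eeeeeeeeeeec6666627777f777766666e2fffffffffffe33b1d11111133333332fffffffffffe3370c0000003333333e33307777b1511111177777333333332fffffffffffc77777b555d555577773eeeeeeeeeec66662777f777766666ee3333701888b88880000000033333332fffffffffffe333b11d111113333333eeeeeeeeeec6666627777f7776666e2fffffffffffc77777736666e6667772fffffffffffbdddddddde11311111d2fffffffffff3eeeeeeeeec666676662fffffffffff7ccccccccd888888b8ce3333077777b151111117777333333392ffffffffffffc77777736666e666677772fffffffffffc777773666e666677772fffffffffffc777773666e666677773eeeeeeeeeec6666a555d555566666ef2220666a15111111666666222222222fffffffffffc777773666e666677772fffffffffffe33370c000000333333f222601888a888800000000222222222fffffffffffc77777736666e6667772fffffffffffc77777736666e6667773eeeeeeeeeeaddddddddf11211111de2fffffffffff3eeeeeeeeec66667666f22206666a1511111166666222222223eeeeeeeeeee6ccccccccd888888a8c92ffffffffffff3eeeeeeeeeed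aaaaaaaba2fffffffffff3eeeeeeeeedaaaaaaba2fffffffffff3eeeeeeeeedaaaaaabae33307777b151111117777733333333f2220666a15111111666666222222222fffffffffff3eeeeeeeeedaaaaaaba2fffffffffff3eeeeeeeeedaaaaaaba2fffffffffff3eeeeeeeeedaaaaaaba2fffffffffff3eeeeeeeeedaaaaaaba2fffffffffffbdddddddde11311111d3eeeeeeeeeeaddddddddf11211111dee33337018888b888000000003333333f22206666a151111116666622222222e3333077777b151111117777333333392ffffffffffff3eeeeeeeeeec6666766662fffffffffff3eeeeeeeeec666766662fffffffffff3eeeeeeeeec66676666e33307777b151111117777733333333f2220666a15111111666666222222222fffffffffff3eeeeeeeeec666766662fffffffffff7cccccccce03000000c3eeeeeeeeee6ccccccccf02000000ce2fffffffffff3eeeeeeeeec666676662fffffffffff3eeeeeeeeec666676662fffffffffff3eeeeeeeeec66667666e33337018888b888000000003333333f22206666a151111116666622222222e3333077777b1511111177773333333a1ffffffffffff3ddddddddddc5557555551fffffffffff3dddddddddc55755555d33307777b2622222277777333333331fffffffffff3dddddddddc55755555f1105592622222255555551111111111fffffffffff7ccccccccd03000000c1fffffffffff3dddddddddc555755553dddddddddd5ccccccccf01000000cd1fffffffffff3dddddddddc555755551fffffffffff3dddddddddc555755551fffffffffff3dddddddddc55575555d33337028888b888000000003333333f110555926222222555555111111111d3333077777b2262222277773333333b1eeeeeeeeeeee2ddddddddddc5556555551eeeeeeeeeee2dddddddddc55655555d220666a37333333666666222222222e1105593733333355555551111111111eeeeeeeeeee2dddddddddc556555551eeeeeeeeee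e6ccccccccd02000000c2dddddddddd5cccccccce01000000cd1eeeeeeeeeee2dddddddddc555655551eeeeeeeeeee2dddddddddc555655551eeeeeeeeeee2dddddddddc555655551eeeeeeeeeee2dddddddddc55565555d2226038888a8880000000022222222e110555933733333555555111111111d22206666a337333336666622222222".
Definition cert_reserve_outside : seq nat := hex_digits
  "49e33337018888b8888800000000003333333332ffffffffffffe33b1d1111111333333332ffffffffffffe3370c000000033333333e33307777b151111111777777333333333f2220666a1511111116666666222222222e3333701888b8888800000000033333333e3333701888b8888800000000033333333e3333b112dddddddfd1111111133333333e3333702ccccccfcc00000000033333333e33337018888b888800000000033333333e3333702ccccccfcc00000000033333333e33337018888b888800000000033333333e33337018888b888800000000033333333f2226018888a8888000000000222222222e33337018888b88880000000003333333392ffffffffffffe33b1d1111111333333332fffffffffff3eeeeeeeeec667666663eeeeeeeeee6cccccccd8888a888cce2fffffffffff7cccccccd8888b888cc2fffffffffffe33b1d11111133333332fffffffffffe33b1d11111133333332fffffffffffe33b1d11111133333332fffffffffffe33b1d11111133333332fffffffffffe33b1d11111133333333eeeeeeeeeef22a1d1111112222222e2fffffffffffe33b1d1111113333333e3331bbbbbbbf2a222222bb33333333f22a13dddddddc56555511111111222222222e333b12dddddddc575555111111113333333392ffffffffffffe3370c0000000333333332fffffffffff3eeeeeeeeec667666663eeeeeeeeee6cccccccd8888a888cce2fffffffffff7cccccccd8888b888cc2fffffffffffe3370c00000033333332fffffffffffe3370c00000033333333eeeeeeeeeef2260c0000002222222e2fffffffffffe3370c00000033333332fffffffffffe3370c0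0000033333332fffffffffffe3370c0000003333333e33307777f2622222277777333333332fffffffffffe3370c0000003333333f22603ccccccd888a88c00000000222222222e333702ccccccd888b88c0000000033333333a1ffffffffffffd3370c0000000333333331fffffffffff3ddddddddc57555555d3ddddddddd5ccccccce88889888ccdd1fffffffffff7ccccccce8888b888cc1fffffffffffd3370c00000033333331fffffffffffd3370c00000033333333dddddddddf1150c0000001111111dd1fffffffffffd3370c00000033333331fffffffffffd3370c00000033333331fffffffffffd3370c0000003333333d33307777f151111117777733333333f11503cccccce888988c000000001111111111fffffffffffd3370c0000003333333d333701cccccce888b88c0000000033333333b1eeeeeeeeeeed2260c000000022222222e1eeeeeeeeee2ddddddddc56555555de2ddddddddd5cccccccf88889888ccdd1eeeeeeeeee6cccccccf8888a888cce1eeeeeeeeeed2260c0000002222222e2ddddddddde1150c0000001111111dd1eeeeeeeeeed2260c0000002222222e1eeeeeeeeeed2260c0000002222222e1eeeeeeeeeed2260c0000002222222e1eeeeeeeeeed2260c0000002222222ed2220666e1511111166666622222222e11502ccccccf888988c00000000111111111d222601ccccccf888a88c00000000222222221eeeeeeeeeeed2260c00000022222229e3333701888b88888000000000333333332fffffffffffe33b1d11111133333332fffffffffffe3370c0000003333333e3331bbbbbb708000000bbb33333333f2221aaaaa608000000aaaa22222222e333370188b88888000000003333333e3333b112ddddddfd11111113333333e3333702cccccfcc000000003333333e3333701888b8888000000003333333e3333702cccccfcc000000003333333e3333701888b8888000000003333333e3333701888b8888000000003333333f222601888a88880000000022222222e3333701888b8888000000003333333ad3333701ccccccfcc0000000003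33333331fffffffffffd33b2e2222223333333d3332bbbbbb708000000bbb333333331fffffffffffd3370c0000003333333f112999995080000009999111111111d3333701cccccfcc000000003333333d3333b2221eeeeeefe2222223333333d3333701cccccfcc000000003333333d3333701cccccfcc000000003333333d3333701cccccfcc000000003333333d3333702888b8888000000003333333f115028889888800000000111111111d3333701ccccccfc000000003333333d3333702888b8888000000003333333bd222601ccccccecc0000000002222222221eeeeeeeeeed2a3f33333322222222ed223aaaaaa608000000aaa222222222e1139999950800000099991111111111eeeeeeeeeed2260c0000002222222ed222601cccccecc0000000022222222d222a3331eeeeeefe33333322222222d222601cccccecc0000000022222222d222601cccccecc0000000022222222d222601cccccecc0000000022222222d222603888a88880000000022222222e115038889888800000000111111111d222603888a88880000000022222222d222601ccccccec00000000222222229e3333702ccccccfcc000000000333333332fffffffffffe33b1d11111133333332fffffffffffe3370c0000003333333e33307777b151111117777733333333f2220666a1511111166666622222222e3333702cccccfcc000000003333333e3333702cccccfcc000000003333333e3333b112ddddddfd11111113333333e3333702cccccfcc000000003333333e3333702cccccfcc000000003333333e3333b1105575555511111113333333e3333702ccccccfc000000003333333f222a11055655555111111122222222e3333b1105575555511111113333333da3333701ccccccfcc00000000033333333a3331fffffffffb2e222222333333332bbbbbbbba337080000003333333bbba33307777f151111117777733333333b2220666e1511111166666622222222a3333701cccccfcc000000003333333a3333701cccccfcc000000003333333a3333b2221eeeeeefe2222223333333a3333701cccccfcc000000003333333b222601cccccecc0000000022222222a3333701cccccfcc000000003333333a33337028888b888000000003333333a3333701ccccccfc000000003333333a3333702888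8b888000000003333333e933337018888b88880000000003333333393332fffffffffb1d11111133333333933307777f2622222277777333333331bbbbbbbb9337080000003333333bbbb11055d26222222555555511111111193333701888b888800000000333333393333701888b888800000000333333393333b112ddddddfd1111111333333393333702cccccfcc000000003333333b11502cccccdcc0000000011111111193333702cccccfcc000000003333333933337018888b888000000003333333933337018888b888000000003333333933337018888b888000000003333333f92226018888a88880000000002222222229223eeeeeeeeea1d1111112222222229220666e37333333666666222222222a11055d3733333355555551111111111aaaaaaaa9226080000002222222aaa9222601888a888800000000222222229222a113dddddded1111111222222229222601888a888800000000222222229222603cccccecc0000000022222222a11503cccccdcc000000001111111119222603cccccecc000000002222222292226018888a888000000002222222292226018888a888000000002222222292226018888a88800000000222222229e33337018888b8888000000000333333332fffffffffffe33b1d1111113333333e33307777f262222227777733333333e33307777b151111117777733333333f2220666a1511111166666622222222e3333701888b8888000000003333333e3333701888b8888000000003333333e3333b112ddddddfd11111113333333e3333b1105575555511111113333333e33337018888b888000000003333333e3333f2220666766662222223333333e33337018888b888000000003333333f2226018888a8880000000022222222e33337018888b8880000000033333339e33337018888b888800000000033333333e3331bbbbbbbf2a222222bb333333332fffffffffffe3370c0000003333333e33307777b151111117777733333333f2220666a1511111166666622222222e3333701888b8888000000003333333e3333701888b8888000000003333333e3333f2221aaaaabaa2222223333333e3333702ccccccfc000000003333333e33337018888b888000000003333333e3333702ccccccfc000000003333333e33337018888b888000000003333333f2226018888a8880000000022222222e33337018888b888000000003333333ad3333701cccccccfc00000000033333333d3332bbbbbbbf19111111bb33333333d33307777b2622222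277777333333331fffffffffffd3370c0000003333333f110559262222225555555111111111d3333701ccccccfc000000003333333d3333701ccccccfc000000003333333d3333f11299999b9911111113333333d3333701ccccccfc000000003333333d3333701ccccccfc000000003333333d3333701ccccccfc000000003333333d33337028888b888000000003333333f115028888988800000000111111111d33337028888b888000000003333333bd222601cccccccec000000000222222222d223aaaaaaae19111111aa222222222d220666a37333333666666222222222e1105593733333355555551111111111eeeeeeeeeeed2260c0000002222222d222601ccccccec0000000022222222d222e11399999a99111111122222222d222601ccccccec0000000022222222d222601ccccccec0000000022222222d222601ccccccec0000000022222222d222601ccccccec0000000022222222d2226038888a8880000000022222222e115038888988800000000111111111d2226038888a8880000000022222222".
Definition cert_reserve_same_row : seq nat := hex_digits
  "492ffffffffffffe33b1d1111111333333332fffffffffff3eeeeeeeeec667666663eeeeeeeeee6cccccccd8888a888cce2fffffffffff7cccccccd8888b888cc2fffffffffffe33b1d11111133333332fffffffffffe33b1d11111133333332fffffffffffe33b1d11111133333332fffffffffffe33b1d11111133333332fffffffffffe33b1d11111133333333eeeeeeeeeef22a1d1111112222222e2fffffffffffe33b1d1111113333333e3331bbbbbbbf2a222222bb33333333f22a13dddddddc56555511111111222222222e333b12dddddddc575555111111113333333329fffffffffff3eeeeeeeeec667666669ffffffffff7ccccccd888b888cc9ffffffffff3eeeeeeeec67666669ffffffffff3eeeeeeeedaaaabaa9ffffffffff3eeeeeeeedaaaabaa9ffffffffff3eeeeeeeec6676666dbbbbbbb3aaaaa86676666aaabbb9ffffffffff3eeeeeeeec66766669ffffffffff3eeeeeee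ec66766669ffffffffff3eeeeeeeedaaaaaba9ffffffffff3eeeeeeeec66766669ffffffffff7cccccccd8888b88cdbbbbbbbb3aaaaaa86676666aabb1afffffffffff3ddddddddc57555555daffffffffff7cccccce888b888ccaffffffffff3ddddddde9999b99daffffffffff3dddddddc5755555daffffffffff3ddddddde9999b99daffffffffff3dddddddc5755555daffffffffff3dddddddc5755555debbbbbbb39999985755555999bbbaffffffffff3dddddddc5755555daffffffffff3ddddddde99999b9daffffffffff7ccccccce8888b88caffffffffff3ddddddddc5755555ebbbbbbbb39999985755555999bb1afffffffffff7ccccccce8888b888ccaffffffffff7cccccce888b888ccaffffffffff7cccccce888b888ccaffffffffff7cccccce888b888ccbeeeeeeeee2dddddddc5655555deaffffffffffbeeeeeeeec6667666affffffffff7cccccce8888b88ccbeeeeeeeee2dddddddc5655555defaaaaaaa29999985655555999aaabeeeeeeeee2dddddddf99999a9deaffffffffff7ccccccce8888b88cfaaaaaaa29999985655555999aaabeeeeeeeeee2ddddddddc56555551afffffffffffd33b2e2222223333333affffffffff3ddddddde9999b99daffffffffff7cccccce888b888ccaffffffffffd33b2e22222333333affffffffffd33b2e22222333333affffffffffd33b2e22222333333affffffffffd33b2e22222333333ebbbbbbb933f286766622222333333bbbfaaaaaaa92e3867666333332222222aaaaffffffffffd33b2e22222333333ebbbbbbbb933f2a22222333333bbaffffffffffd33b2c6766622222333333beeeeeeeeeed2a3c6766633333222222229fffffffffffe33b1d11111133333339ffffffffff3eeeeeeeedaaaabaa9ffffffffff7ccccccd888b888cc9ffffffffffe33b1d1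11113333339ffffffffffe33b1d111113333339ffffffffffe33b1d11111333333dbbbbbbba33f185755511111333333bbb9ffffffffffe33b1d11111333333f999999a1d385755533333111111199999ffffffffffe33b1d111113333339ffffffffffe33b1c5755511111333333dbbbbbbbba33f1911111333333bbbddddddddde193c57555333331111111d39eeeeeeeeeef22a1d1111112222222e9eeeeeeeee2ffffffffdaaaabaae9eeeeeeeee6ccccccd888a888cce9eeeeeeeeef22a1d11111222222e9eeeeeeeeef22a1d11111222222e9eeeeeeeeef22a1d11111222222edaaaaaab22e185655511111222222aaaae999999b1d285655522222111111199999eeeeeeeeef22a1d11111222222e9eeeeeeeeef22a1d11111222222e9eeeeeeeeef22a1c5655511111222222eadddddddddf192c56555222221111111ddaaaaaaab22e1911111222222aaa92fffffffffffe33b1d11111133333332ffffffffff3eeeeeeeec66766663eeeeeeeeeadddddddc5565555de2ffffffffffbdddddddc5575555d2ffffffffffe33b1d111113333332ffffffffffe33b1d111113333332ffffffffffe33b1d111113333332ffffffffffe33b1d111113333333eeeeeeeeef22a1d11111222222e2ffffffffffe33b1d11111333333e3331bbbbbbf2a22222bb3333333f22a13ddddddc56555111111122222222e333b12ddddddc5755511111113333333da3331fffffffffb2e222222333333332bbbbbbb3aaaaa86676666aaabbba331ffffffff7ccccce888b8c33333333b221eeeeeee6cccccf888a8ce22222222a3331ffffffffb2e222223333333a3331ffffffffb2e222223333333a3331ffffffffb2e222223333333a3331ffffffffb2e2222233333338277777b777727777b77776331ffffffbcccec33333327777b777727777b777727777b77776333b221ccecc22223333363337221eeefe222233333277777b7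77277777b777277777b777836666a666663666a666663666a666667221eeeeeacccfce2222223666a66666722a331ccecc333322222236666a666663337221eeefe22223333336666a666636666a666636666a6666a3331ffffffffb2e2222233333332bbbbbbbba33f185755511111333333bb3aaaaaaab22e185655511111222222aaae93332fffffffffb1d111111333333339332ffffffff7cccccd888b8c333333331bbbbbbb39999985755555999bbbb12ddddddd5cccccf88898cd11111111193332ffffffffb1d11111333333393332ffffffffb1d11111333333393332ffffffffb1d11111333333393332ffffffffb1d1111133333338177777b77775332ffffffbcccdc33333317777b777717777b777717777b777717777b77775333b12ccdcc11111333335333712dddfd1111133333177777b777177777b777177777b77783555955555535595555553559555555712ddddd9cccfcd1111111719332ccdcc33331111111355595555535559555555333712dddfd111113333335559555553555955555355595555593332ffffffffb1d1111133333331bbbbbbbb933f286676622222333333bb39999999b1d2856555222221111111999f9223eeeeeeeeea1d111111222222222923eeeeeeee6cccccd888a8c222222222a13ddddddd5ccccce88898cd1111111111aaaaaaa29999985655555999aaa9223eeeeeeeea1d11111222222229223eeeeeeeea1d11111222222229223eeeeeeeea1d11111222222229223eeeeeeeea1d1111122222222816666a66666523eeeeeeacccdc22222221666a666661666a666661666a66666522a13ccdcc1111122222216666a6666522613ddded1111122222216666a666616666a666616666a66668255595555552559555555613ddddd9cccecd1111111255955555561923ccdcc22222111111125559555552555955555522613ddded111112222222555955555255595555525559555559223eeeeeeeea1d11111222222221aaaaaaaa92e3866766333332222222aa29999999a1d3857555333331111111999d2bbbbbbbbba33f191111113333333bb2bbbbbbbb3aaaaaa86676666aabb3aaaaaaa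8666e559555566666aaa2bbbbbbbb87777f55955557777bb2bbbbbbbba33f1911111333333bb2bbbbbbbba33f1911111333333bb2bbbbbbbba33f1911111333333bb2bbbbbbbba33f1911111333333bba3331ffffffffb2e222223333333b22e13999998565559111111122222222a333f12999998575559111111133333332bbbbbbbbba33f1911111333333b3aaaaaaaab22e1911111222222aa9e3331bbbbbbbf2a222222bb333333332ffffffffff3eeeeeeeec6676666e331bbbbbb7888acccfc888bb33333333f221aaaaa6888bcccec888aaa22222222e3331bbbbbbf2a22222bb3333333e3331bbbbbbf2a22222bb3333333e3331bbbbbbf2a22222bb3333333e3331bbbbbbf2a22222bb33333332ffffffffffe33b1c57555111113333333eeeeeeeeef22a1c5655511111222222ee3331bbbbbbbf2a22222b3333333c277777f777727777f77776331bbbbba77f77b33333327777f777727777f777727777f77776333b125f5551111133333277777f777277777f777277777f77763337221aaaba222233333c36666e666663666e666663666e666667221aaaab66e66aa2222223666e66666722a135e5551111122222236666e666636666e666636666e666636666e666663337221aaaba222233333ad3332bbbbbbbf19111111bb33333333d332bbbbbb78889cccfc888bb333333331ffffffffff3ddddddddc5755555f12999995888bcccdc888999111111111d3332bbbbbbf1911111bb3333333d3332bbbbbbf1911111bb3333333d3332bbbbbbf1911111bb3333333d3332bbbbbbf1911111bb33333331ffffffffffd33b2c66766222223333333dddddddddf192c56555222221111111dd3332bbbbbbbf1911111b3333333c177777f77775332bbbbb977f77b33333317777f777717777f777717777f777717777f77775333b2216f666222233333177777f777177777f777177777f7775333712999b91111133333c3555d555555355d555555355d5555557129999b5d5559911111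11719236d6662222211111113555d555553555d555553555d555553555d555553555d555555333712999b91111133333bd223aaaaaaae19111111aa222222222d23aaaaaa68889cccec888aa222222222e13999995888acccdc8889991111111111eeeeeeeeee2ddddddddc5655555d223aaaaaae1911111aa22222222d223aaaaaae1911111aa22222222d223aaaaaae1911111aa22222222d223aaaaaae1911111aa222222221eeeeeeeeeed2a3c667663333322222222ddddddddde193c57555333331111111dd223aaaaaaae1911111a22222222c16666e66666523aaaaa96e666a22222221666e666661666e666661666e66666522a3317e777333322222216666e666616666e666616666e666616666e6666522613999a911111222222c2555d555555255d5555556139999a5d555991111111255d5555556193327d777333311111112555d555552555d555552555d555552555d555552555d55555522613999a911111222222".
Definition cert_reserve_other_row : seq nat := hex_digits
  "85e33337110999b9999911111111333333332fffffffffffe3371d11111133333332fffffffffffe33b0c0000003333333e3330bbbbbb719111111bbb33333333f2220aaaaa619111111aaaa22222222e3333711099b9999911111113333333e3333b02cccccfcc000000003333333e33337112ddddddfd11111113333333e33337110999b999911111113333333e33337112ddddddfd11111113333333e33337110999b999911111113333333e33337110999b999911111113333333f2226110999a9999111111122222222e33337110999b99991111111333333352fffffffffffe3371d11111133333332ffffffffff3eeeeeeeecaaaabaa3eeeeeeeee6dddddddc999a999de2ffffffffff7dddddddc999b999d2ffffffffffe3371d111113333333eeeeeeeeef2261d11111222222e2ffffffffffe3371d111113333332ffffffffffe3371d111113333332ffffffffffe3371d111113333332ffffffffffe3371d11111333333e3331777f2622222777773333333f22613ddddddc99a99111111122222222e333712ddddddc99b991111111333333352fffffffffffe33b0c0000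0033333332ffffffffff3eeeeeeeecaaaabaa3eeeeeeeee6dddddddc999a999de2ffffffffff7dddddddc999b999d2ffffffffffe33b0c000003333332ffffffffffe33b0c000003333332ffffffffffe33b0c000003333332ffffffffffe33b0c000003333333eeeeeeeeef22a0c00000222222ee3330bbbbbbf2a22222bb33333332ffffffffffe33b0c00000333333f2260999a99993ddddddc99a99099a9999099a9999a03cccdc00000903cccdc000000999a9990999a9990999a99922222222e33370999b99992ddddddc99b99099b9999099b9999b02cccdc000000999b999902cccdc000000999b9990999b999333333361fffffffffffd33b0c00000033333331ffffffffff3dddddddc999b999d3dddddddd5eeeeeeec999a999edd1ffffffffff7eeeeeeeecaaaabaa1ffffffffffd33b0c000003333331ffffffffffd33b0c000003333331ffffffffffd33b0c000003333331ffffffffffd33b0c000003333333ddddddddf1190c00000111111ddd3330bbbbbbf1911111bb3333333f1150999a99993eeeeeec99a99099a9999099a9999a03cccec00000903cccec000000999a9990999a9990999a999111111111ffffffffffd33b0c00000333333d33370aaaabaaa1eeeeeecaaaba0aaabaaa0aaabaaa0aaabaaab01cccec00000a01cccec000000aaaabaa0aaaabaa333333371eeeeeeeeeed22a0c0000002222222e1eeeeeeeee2dddddddc999a999de2dddddddd5ffffffffc999b999dd1eeeeeeeee6ffffffffcaaaabaae1eeeeeeeeed22a0c00000222222e1eeeeeeeeed22a0c00000222222e1eeeeeeeeed22a0c00000222222e2dddddddde1190c00000111111dd1eeeeeeeeed22a0c00000222222ed2220aaaaae1911111aaa2222222e1150999b99992ffffffc99b99099b9999099b9999b02cccfc0000009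99b999902cccfc000000999b9990999b99911111111d22260aaaabaaa1ffffffcaaaba0aaabaaa0aaabaaa0aaabaaab01cccfc00000a01cccfc000000aaaabaa0aaaabaa22222221eeeeeeeeeed22a0c00000222222d6333372220aaabaaaa222222333333363331ffffffff72e22222333333363330bbbbb72a22222bbb333333363330bbbbbf1911111bbb333333372220aaaae1911111aaaa22222227222a01ccccecc0000000222222263333b01ccccfcc00000003333336333372220aabaaaa222223333336333372221eeeeefe222223333336333372221eeeeefe222223333336333372220aaabaaa222223333336333372220aaabaaa222223333336333372220aaabaaa22222333333e53333711099b999991111111333333353332ffffffff71d11111333333353330bbbbbf2a22222bbb333333353330bbbbb71911111bbb33333337110999d2a222229999911111111711902ccccdcc00000001111111153333b02ccccfcc0000000333333533337112dddddfd11111133333353333711099b9999111111333333533337112dddddfd11111133333353333711099b999911111133333353333711099b999911111133333353333711099b9999111111333333f5222611099a999991111111222222225223eeeeeeee61d11111222222225220aaaae3b33333aaaa222222226110999d3b33333999991111111152220aaaa61911111aaaa2222222611903ccccdcc0000000111111115222a03ccccecc0000000222222252226113ddddded111111222222252226113ddddded11111122222225222611099a999911111122222225222611099a999911111122222225222611099a999911111122222225222611099a99991111112222222d6333372220aaabaaaa2222223333333277777633f15111113333337777763330bbbbb72a22222bbb333333363331ffffffffb0c00000333333372221eeeeeeea0c00000e22222226333372220aabaaaa222223333337222a01ccccecc0000000222222263333b01ccccfcc00000003333336333372221eeeeefe222223333336333372221eeeeefe222223333336333372220aaabaaa222223333336333372220aaabaaa222223333336333372220aaabaaa22222333333e5333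37110999b999911111113333333177777533f26222223333337777753332ffffffffb0c00000333333353330bbbbb71911111bbb33333337112ddddddd90c00000d11111111711902ccccdcc00000001111111153333711099b999911111133333353333b02ccccfcc0000000333333533337112dddddfd111111333333533337112dddddfd111111333333533337110999b999111111333333533337110999b999111111333333533337110999b999111111333333f52226110999a99991111111222222221666652e373333322222226666665223eeeeeeeea0c00000222222226113ddddddd90c00000d1111111152220aaaaa61911111aaa2222222611903ccccdcc0000000111111115222a03ccccecc000000022222225222611099a9999111111222222252226113ddddded111111222222252226113ddddded111111222222252226110999a999111111222222252226110999a999111111222222252226110999a99911111122222225e33337110999b9999111111133333332ffffffffffe3371d11111333333e3330bbbbbbf2a22222bb3333333e3330bbbbbb71911111bb3333333f2220aaaaa61911111aaa2222222e3333711099b9999111111333333e3333f2220aaaabaa22222333333e33337112dddddfd111111333333e33337110999b999111111333333e33337112dddddfd111111333333e33337110999b999111111333333f2226110999a9991111112222222e33337110999b9991111113333335e33337110999b999911111113333333e3331777f26222227777733333332ffffffffffe33b0c00000333333e3330bbbbbb71911111bb3333333f2220aaaaa61911111aaa2222222e3333711099b9999111111333333e3333b02cccccfc0000000333333e3333b02cccccfc0000000333333e33337110999b999111111333333e3333f2221667666622222333333e33337110999b999111111333333f2226110999a9991111112222222e33337110999b9991111113333336d333372220aaaabaaa2222223333333d3332777f1511111777773333333d3330bbbbbb72a22222bb33333331ffffffffffd33b0c00000333333f110999952a22222999911111111d333372220aaabaaa22222333333d3333b01cccccfc0000000333333d333372220aaabaaa22222333333d3333b01cccccfc0000000333333d3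333f1125575555111111333333d333372220aaaabaa22222333333f115220999a99922222211111111d333372220aaaabaa222223333337d22263330aaaabaaa33333322222222d223666e15111116666622222222d220aaaaa63b33333aaa22222222e110999953b333339999111111111eeeeeeeeeed22a0c00000222222d22263330aaabaaa333332222222d222a01cccccec00000002222222d22263330aaabaaa333332222222d222e11355655551111112222222d222a01cccccec00000002222222d22263330aaaabaa333332222222e1153330999b9993333311111111d22263330aaaabaa333332222222".
End Certificates.

Lemma check_full_board : check_block_win 17 false [::] [::]
  [:: Some 3; Some 2; Some 2; Some 2; Some 2; Some 2; Some 2; Some 2; Some 2] cert_full = Some [::].
Proof. by vm_compute. Qed.

Lemma check_five_inside : check_block_win 17 true [::] [:: 0]
  [:: Some 3; Some 3; Some 2; Some 2; Some 2; Some 3; Some 2; Some 2; Some 2]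
  cert_five_inside = Some [::].
Proof. by vm_compute. Qed.

Lemma check_five_outside : check_block_win 17 true [::] [::]
  [:: Some 3; Some 3; Some 2; Some 2; Some 2; Some 2; Some 2; Some 2; Some 2]
  cert_five_outside = Some [::].
Proof. by vm_compute. Qed.

Lemma check_reserve_outside : check_block_win 17 true [::] [::]
  [:: Some 3; Some 3; None; None; None; None; None; None; None] cert_reserve_outside = Some [::].
Proof. by vm_compute. Qed.

Lemma check_reserve_same_row : check_block_win 17 true [::] [:: 0]
  [:: Some 3; Some 4; None; None; None; None; None; None; None] cert_reserve_same_row = Some [::].
Proof. by vm_compute. Qed.

Lemma check_reserve_other_row : check_block_win 17 true [::] [:: 4]
  [:: Some 3; Some 3; None; None; None; None; None; None; None] cert_reserve_other_row = Some [::].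
Proof. by vm_compute. Qed.

Lemma transversal_game_corner n :
  (forall d : cell n.+2, d.1 != ord0 -> p1_wins [set (ord0, ord0)] [set d]) ->
  transversal_game_p1_wins n.+2.
Proof.
move=> reply; apply: (p1_wins_step (c := (ord0, ord0))); rewrite ?setU0 ?inE //.
  by exists (ord_max, ord_max); rewrite !inE.
move=> d; rewrite inE => d_corner; split.
  by move/claims_transversal_card; rewrite setU0 cards1.
rewrite setU0; have [d1 | d1] := eqVneq d.1 ord0; last exact: reply.
have d2 : (tr_cell d).1 != ord0.
  by apply: contra d_corner; case: d d1 => /= x y -> /eqP ->.
by have := p1_wins_tr (reply _ d2); rewrite !tr_set1 tr_cellK.
Qed.

Lemma transversal_game4 : transversal_game_p1_wins 4.
Proof.
apply: (p1_wins_block_game (Ur := [set: 'I_4]) (Uc := [set: 'I_4]) (preR := [::])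
  (preC := [::]) (z0 := ord0) _ _ _ _ _ _ _ _ _ _ _ check_full_board);
  rewrite ?cardsT ?card_ord ?cards0 //.
- by move=> c; rewrite inE.
- by move=> c d; rewrite inE.
- by move=> _ d; rewrite !inE.
move=> er ec _ _ _ _ _ _; split; first by move=> x _; rewrite inE.
move=> k s hk; have := line_count_le_card er ec k set0; rewrite cards0 leqn0 => /eqP ->.
by case: k hk => [|[|[|[|[|[|[|[|[|k]]]]]]]]] //= _ [<-].
Qed.

Lemma line_count_row0 n (er ec : 'I_4 -> 'I_n) (O : {set cell n}) :
  (forall z, z \in O -> z.1 = er (inord 0)) -> line_count er ec 1 O = 0.
Proof.
move=> onrow; apply/eqP; rewrite cards_eq0; apply/eqP/setP => z; rewrite !inE.
by rewrite /counted /=; apply/negP => /andP [/onrow ->]; rewrite eqxx.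
Qed.

Lemma line_count_col0 n (er ec : 'I_4 -> 'I_n) (O : {set cell n}) :
  (forall z, z \in O -> z.2 = ec (inord 0)) -> line_count er ec 5 O = 0.
Proof.
move=> oncol; apply/eqP; rewrite cards_eq0; apply/eqP/setP => z; rewrite !inE.
by rewrite /counted /=; apply/negP => /andP [/oncol ->]; rewrite eqxx.
Qed.

Lemma p1_wins_five_reply (d : cell 5) : d.1 != ord0 -> p1_wins [set (ord0, ord0)] [set d].
Proof.
move=> d1; pose U : {set 'I_5} := [set~ ord0].
have cardU : #|U| = 4 by rewrite cardsC1 card_ord.
have X_out (c : cell 5) : c \in [set (ord0, ord0)] -> (c.1 \notin U) && (c.2 \notin U).
  by rewrite !inE => /eqP ->.
have X_sep (c c' : cell 5) : c \in [set (ord0, ord0)] -> c' \in [set (ord0, ord0)] -> c != c' ->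
    (c.1 != c'.1) && (c.2 != c'.2).
  by rewrite !inE => /eqP -> /eqP ->; rewrite eqxx.
have count_d er ec k : line_count er ec k [set d] <= 1.
  by have := line_count_le_card er ec k [set d]; rewrite cards1.
have [d2 | d2] := eqVneq d.2 ord0.
  apply: (p1_wins_block_game (n := 5) (preR := [:: d.1]) (preC := [::]) (z0 := ord0)
    isT cardU cardU _ _ _ _ _ X_out X_sep _ check_five_outside) => //.
  - by move=> z; rewrite inE => /eqP ->; rewrite !inE.
  - by rewrite cards1.
  move=> er ec _ _ er_U ec_U er_pre _; split.
    move=> x _; rewrite inE; apply/eqP => dx.
    by move: (ec_U (inord (x %% 4))); rewrite -[ec _]/((block_cell er ec x).2) dx d2 !inE.
  move=> k s hk.
  have count : line_count er ec k [set d] <= (k != 1).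
    case: (k =P 1) => [->|_]; last exact: count_d.
    by rewrite line_count_row0 // => z; rewrite inE => /eqP ->; rewrite (er_pre 0).
  by move: count; case: k hk => [|[|[|[|[|[|[|[|[|k]]]]]]]]] //= _ count [<-];
    rewrite /line_bound /=; lia.
apply: (p1_wins_block_game (n := 5) (preR := [:: d.1]) (preC := [:: d.2]) (z0 := ord0)
  isT cardU cardU _ _ _ _ _ X_out X_sep _ check_five_inside) => //.
- by move=> z; rewrite inE => /eqP ->; rewrite !inE.
- by move=> z; rewrite inE => /eqP ->; rewrite !inE.
- by rewrite cards1.
move=> er ec er_inj ec_inj _ _ er_pre ec_pre.
have dE : block_cell er ec 0 = d by rewrite /block_cell (er_pre 0) // (ec_pre 0) //; case: (d).
split.
  move=> x hx; rewrite inE -dE.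
  by rewrite eq_block_cell // inE.
move=> k s hk.
have count : line_count er ec k [set d] <= (k != 1) && (k != 5).
  case: (k =P 1) => [->|_].
    by rewrite line_count_row0 // => z; rewrite inE => /eqP ->; rewrite (er_pre 0).
  case: (k =P 5) => [->|_]; last exact: count_d.
  by rewrite line_count_col0 // => z; rewrite inE => /eqP ->; rewrite (ec_pre 0).
by move: count; case: k hk => [|[|[|[|[|[|[|[|[|k]]]]]]]]] //= _ count [<-];
  rewrite /line_bound /=; lia.
Qed.

Lemma transversal_game5 : transversal_game_p1_wins 5.
Proof. exact: transversal_game_corner p1_wins_five_reply. Qed.

(* A position just after a move of player 1, with an empty k x k block. *)
Record block_position n k (X O : {set cell n}) (Ur Uc : {set 'I_n}) : Prop := {
  block_rows : #|Ur| = k;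
  block_cols : #|Uc| = k;
  block_X_card : #|X| + k = n;
  block_X_out : forall c, c \in X -> (c.1 \notin Ur) && (c.2 \notin Uc);
  block_X_sep : forall c d, c \in X -> d \in X -> c != d -> (c.1 != d.1) && (c.2 != d.2);
  block_O_out : forall c, c \in O -> ~~ ((c.1 \in Ur) && (c.2 \in Uc));
  block_O_card : #|O| + k + 1 = n }.

Definition p1_wins_all_replies n (X O : {set cell n}) : Prop :=
  forall d, d \notin X :|: O -> ~ claims_transversal (d |: O) /\ p1_wins X (d |: O).

Lemma card_setD1_gt0 n (A : {set 'I_n}) k x : 0 < k -> #|A| = k.+1 -> x \in A -> 0 < #|A :\ x|.
Proof. by move=> k0 cardA xA; move: (cardsD1 x A); rewrite cardA xA; lia. Qed.

Lemma block_move_exists n k (Ur Uc : {set 'I_n}) R (d : cell n) :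
  0 < k -> #|Ur| = k.+1 -> #|Uc| = k.+1 -> R \in Ur ->
  exists m : cell n, [/\ m.1 \in Ur, m.2 \in Uc, m.1 != R, m != d
    & ~~ ((d.1 \in Ur :\ m.1) && (d.2 \in Uc :\ m.2))].
Proof.
move=> k0 cardUr cardUc RU.
have [s] : exists s, s \in Ur :\ R by apply/card_gt0P; exact: card_setD1_gt0 cardUr RU.
rewrite in_setD1 => /andP [sR sU].
have [/andP [d1 d2] | out] := boolP ((d.1 \in Ur) && (d.2 \in Uc)); last first.
  have [t tU] : exists t, t \in Uc by apply/card_gt0P; rewrite cardUc.
  exists (s, t); split => //=.
    by apply/negP => /eqP sd; move: out; rewrite -sd /= sU tU.
  by apply: contra out; rewrite !in_setD1 => /andP [/andP [_ ->] /andP [_ ->]].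
have [dR | dR] := eqVneq d.1 R.
  exists (s, d.2); split => //=; last by rewrite !in_setD1 eqxx andbF.
  by apply: contraNneq sR => sd; rewrite -dR -sd.
have [t] : exists t, t \in Uc :\ d.2 by apply/card_gt0P; exact: card_setD1_gt0 cardUc d2.
rewrite in_setD1 => /andP [td tU].
exists (d.1, t); split => //=; last by rewrite !in_setD1 eqxx.
by apply: contra td => /eqP <-.
Qed.

Lemma block_position_shrink n k (X O : {set cell n}) Ur Uc (m d : cell n) :
  block_position k.+1 X O Ur Uc -> m.1 \in Ur -> m.2 \in Uc -> d \notin X :|: O -> m != d ->
  ~~ ((d.1 \in Ur :\ m.1) && (d.2 \in Uc :\ m.2)) ->
  block_position k (m |: X) (d |: O) (Ur :\ m.1) (Uc :\ m.2).
Proof.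
case=> cardUr cardUc cardX X_out X_sep O_out cardO m1 m2 /[!in_setU] /norP [dX dO] md d_out.
have mX : m \notin X by apply/negP => /X_out; rewrite m1.
split.
- by move: (cardsD1 m.1 Ur); rewrite cardUr m1 add1n => -[].
- by move: (cardsD1 m.2 Uc); rewrite cardUc m2 add1n => -[].
- by rewrite cardsU1 mX add1n; lia.
- move=> c; rewrite in_setU1 => /orP [/eqP ->|cX]; first by rewrite !in_setD1 !eqxx.
  by have /andP [c1 c2] := X_out c cX; rewrite !in_setD1 (negbTE c1) (negbTE c2) !andbF.
- have sep_m c : c \in X -> (m.1 != c.1) && (m.2 != c.2).
    move=> /X_out /andP [c1 c2]; apply/andP; split.
      by apply: contraNneq c1 => <-.
    by apply: contraNneq c2 => <-.
  move=> c e; rewrite !in_setU1 => /orP [/eqP ->|cX] /orP [/eqP ->|eX] ce.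
  + by rewrite eqxx in ce.
  + exact: sep_m.
  + by rewrite (eq_sym c.1) (eq_sym c.2); apply: sep_m.
  + exact: X_sep.
- move=> c; rewrite in_setU1 => /orP [/eqP ->|cO] //.
  by apply: contra (O_out c cO); rewrite !in_setD1 => /andP [/andP [_ ->] /andP [_ ->]].
- by rewrite cardsU1 dO add1n; lia.
Qed.

Lemma p1_wins_block_step n k (X O : {set cell n}) Ur Uc R d :
  0 < k -> block_position k.+1 X O Ur Uc -> R \in Ur ->
  (exists2 b, b \in d |: O & b.1 = R) -> d \notin X :|: O ->
  (forall X' O' Ur' Uc', block_position k X' O' Ur' Uc' -> R \in Ur' ->
     (exists2 b, b \in O' & b.1 = R) -> p1_wins_all_replies X' O') ->
  p1_wins X (d |: O).
Proof.
move=> k0 pos RU rowR d_free next.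
have [cardUr cardUc _ X_out _ O_out _] := pos.
have [m [m1 m2 mR md d_out]] := block_move_exists d k0 cardUr cardUc RU.
have pos' := block_position_shrink pos m1 m2 d_free md d_out.
have m_free : m \notin X :|: (d |: O).
  rewrite !in_setU !in_set1 !negb_or md /=.
  by apply/andP; split; apply/negP; [move/X_out | move/O_out]; rewrite m1 ?m2.
apply: (p1_wins_step m_free); last first.
  by apply: (next _ _ _ _ pos') rowR; rewrite in_setD1 RU eq_sym mR.
have [r] : exists r, r \in Ur :\ m.1 by apply/card_gt0P; rewrite (block_rows pos').
have [c] : exists c, c \in Uc :\ m.2 by apply/card_gt0P; rewrite (block_cols pos').
move=> cU rU; exists (r, c).
rewrite in_setU negb_or; apply/andP; split; apply/negP.
  by move/(block_X_out pos') => /=; rewrite rU.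
by move/(block_O_out pos') => /=; rewrite rU cU.
Qed.

Lemma card_row_split n (A : {set cell n}) (R : 'I_n) :
  #|[set z in A | z.1 != R]| + #|[set z in A | z.1 == R]| = #|A|.
Proof.
rewrite -(cardsID [set z | z.1 != R] A); congr (_ + _); apply: eq_card => z; rewrite !inE //.
by rewrite negbK andbC.
Qed.

(* The reserved row is enumerated first, so counter 1 watches it. *)
Lemma reserve_slack_ok n (er ec : 'I_4 -> 'I_n) (O : {set cell n}) j :
  #|O| + 4 = n -> j <= #|[set z in O | z.1 == er (inord 0)]| ->
  slack_ok er ec O [:: Some 3; Some j.+2; None; None; None; None; None; None; None].
Proof.
move=> cardO rowR [|[|k]] s hk; last by case: k hk => [|[|[|[|[|[|[|k]]]]]]].
  by rewrite line_count0 line_bound0 => -[<-]; lia.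
have := card_row_split O (er (inord 0)).
by rewrite line_count1 line_boundS => split_row [<-]; lia.
Qed.

Lemma p1_wins_reserve_endgame n (X O : {set cell n}) Ur Uc R rows cols L j cert d :
  block_position 4 X O Ur Uc -> d \notin X :|: O ->
  uniq (R :: rows) -> uniq cols -> {subset R :: rows <= Ur} -> {subset cols <= Uc} ->
  j <= #|[set z in d |: O | z.1 == R]| ->
  check_block_win 17 true [::] L
    [:: Some 3; Some j.+2; None; None; None; None; None; None; None] cert = Some [::] ->
  (forall er ec : 'I_4 -> 'I_n, injective er -> injective ec ->
     (forall i, er i \in Ur) -> (forall i, ec i \in Uc) ->
     (forall k, k < size (R :: rows) -> er (inord k) = nth R (R :: rows) k) ->
     (forall k, k < size cols -> ec (inord k) = nth R cols k) ->
     forall x, x < 16 -> (block_cell er ec x == d) = (x \in L)) ->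
  p1_wins X (d |: O).
Proof.
move=> [cardUr cardUc cardX X_out X_sep O_out cardO] /[!in_setU] /norP [_ dO].
move=> uniqR uniqC subR subC rowR check trace_d.
apply: (p1_wins_block_game (z0 := R) _ cardUr cardUc uniqR uniqC subR subC cardX X_out X_sep _
  check) => //; first lia.
move=> er ec er_inj ec_inj er_U ec_U er_pre ec_pre; split.
  move=> x hx; rewrite in_setU1 (trace_d er ec er_inj ec_inj er_U ec_U) //; case: (x \in L) => //=.
  by apply/negP => /O_out; rewrite /= er_U ec_U.
apply: reserve_slack_ok; first by rewrite cardsU1 dO; lia.
by rewrite (er_pre 0).
Qed.

Lemma p1_wins_all_replies_block4 n (X O : {set cell n}) Ur Uc R :
  block_position 4 X O Ur Uc -> R \in Ur -> (exists2 b, b \in O & b.1 = R) ->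
  p1_wins_all_replies X O.
Proof.
move=> pos RU [b bO bR] d d_free.
have [cardUr cardUc cardX X_out X_sep O_out cardO] := pos.
have dO : d \notin O by move: d_free; rewrite in_setU negb_or => /andP [].
split; first by move/claims_transversal_card; rewrite cardsU1 dO; lia.
have b_row : b \in [set z in d |: O | z.1 == R] by rewrite !inE bO bR eqxx orbT.
have row_gt0 : 0 < #|[set z in d |: O | z.1 == R]| by apply/card_gt0P; exists b.
have [/andP [d1 d2] | out] := boolP ((d.1 \in Ur) && (d.2 \in Uc)); last first.
  apply: (p1_wins_reserve_endgame (rows := [::]) (cols := [::]) pos d_free _ _ _ _
    row_gt0 check_reserve_outside) => //; first by move=> z; rewrite inE => /eqP ->.
  move=> er ec _ _ er_U ec_U _ _ x _; apply/negP => /eqP xd.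
  by move: out; rewrite -xd /= er_U ec_U.
have [dR | dR] := eqVneq d.1 R.
  have row2 : 1 < #|[set z in d |: O | z.1 == R]|.
    apply/card_gt1P; exists b, d; rewrite b_row !inE eqxx dR eqxx; split=> //.
    by apply: contraNneq dO => <-.
  apply: (p1_wins_reserve_endgame (rows := [::]) (cols := [:: d.2]) pos d_free _ _ _ _
    row2 check_reserve_same_row) => //.
  - by move=> z; rewrite inE => /eqP ->.
  - by move=> z; rewrite inE => /eqP ->.
  move=> er ec er_inj ec_inj _ _ er_pre ec_pre x hx.
  have -> : d = block_cell er ec 0.
    by rewrite /block_cell (er_pre 0) // (ec_pre 0) // -dR; case: (d).
  by rewrite eq_block_cell // inE.
apply: (p1_wins_reserve_endgame (rows := [:: d.1]) (cols := [:: d.2]) pos d_free _ _ _ _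
  row_gt0 check_reserve_other_row) => //.
- by rewrite /= inE andbT eq_sym.
- by move=> z; rewrite !inE => /orP [] /eqP ->.
- by move=> z; rewrite inE => /eqP ->.
move=> er ec er_inj ec_inj _ _ er_pre ec_pre x hx.
have -> : d = block_cell er ec 4 by rewrite /block_cell (er_pre 1) // (ec_pre 0) //; case: (d).
by rewrite eq_block_cell // inE.
Qed.

Lemma p1_wins_all_replies_block n m (X O : {set cell n}) Ur Uc R :
  block_position (m + 4) X O Ur Uc -> R \in Ur -> (exists2 b, b \in O & b.1 = R) ->
  p1_wins_all_replies X O.
Proof.
elim: m X O Ur Uc => [|m IH] X O Ur Uc pos RU rowR.
  exact: p1_wins_all_replies_block4 pos RU rowR.
move=> d d_free; split.
  have dO : d \notin O by move: d_free; rewrite in_setU negb_or => /andP [].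
  by move/claims_transversal_card; rewrite cardsU1 dO; have := block_O_card pos; lia.
have pos' : block_position (m + 4).+1 X O Ur Uc by rewrite -addSn.
have rowR' : exists2 b, b \in d |: O & b.1 = R.
  by case: rowR => b bO bR; exists b; rewrite // in_setU1 bO orbT.
exact: p1_wins_block_step (ltn_addl m (isT : 0 < 4)) pos' RU rowR' d_free IH.
Qed.

Lemma p1_wins_big_reply n (d : cell n.+4.+2) :
  d.1 != ord0 -> p1_wins [set (ord0, ord0)] [set d].
Proof.
move=> d1; pose U : {set 'I_n.+4.+2} := [set~ ord0].
have pos : block_position (n + 4).+1 [set (ord0, ord0)] set0 U U.
  split; rewrite ?cardsC1 ?card_ord ?cards1 ?cards0; try lia.
  - by move=> c; rewrite !inE => /eqP ->; rewrite eqxx.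
  - by move=> c e; rewrite !inE => /eqP -> /eqP ->; rewrite eqxx.
  - by move=> c; rewrite inE.
have RU : d.1 \in U by rewrite !inE.
have rowR : exists2 b, b \in d |: set0 & b.1 = d.1 by exists d; rewrite ?setU11.
have d_free : d \notin [set (ord0, ord0)] :|: set0.
  by rewrite setU0 inE; apply: contra d1 => /eqP ->.
rewrite -(setU0 [set d]).
exact: p1_wins_block_step (ltn_addl n (isT : 0 < 4)) pos RU rowR d_free
  (fun X O Ur Uc => @p1_wins_all_replies_block _ n X O Ur Uc d.1).
Qed.

Theorem theorem1 (n : nat) (hn : 4 <= n) : transversal_game_p1_wins n.
Proof.
case: n hn => [|[|[|[|[|[|n]]]]]] // _.
- exact: transversal_game4.
- exact: transversal_game5.
exact: transversal_game_corner (@p1_wins_big_reply n).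
Qed.
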